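(* Let $\lambda^a$, $\lambda^{ak}$ and the CPS translation $\psi$, $(D:k)$ be as in the context, and let $k$ be a fresh variable. Then: (1) If $\Gamma\vdash^a D:A$, then $\psi(\Gamma),k:K(A)\vdash^a (D:k):R$. (2) If $\Gamma\vdash^a D:A$ and $D\to D'$ in $\lambda^a$, then $(D:k)\to^+(D':k)$ in $\lambda^{ak}$ (one or more reduction steps).
   Context: All terms are considered up to $\alpha$-renaming; $[z/y]D$ is capture-avoiding substitution. Calculus $\lambda^a$: values $V::=*\mid\lambda y_1\ldots y_n.D$ ($n\ge1$); declarations $D::=\mathsf{let}\ x_1=V_1\ \mathsf{in}\cdots\mathsf{let}\ x_m=V_m\ \mathsf{in}\ M$ ($m\ge0$); terms $M::=x\mid @(M,M_1,\ldots,M_n)$ ($n\ge1$). Convention: if $D_i=\mathsf{let}\,(x=V)^*_i\ \mathsf{in}\ M_i$, then $@(D_0,\ldots,D_n)$ abbreviates the declaration obtained by putting all these let-prefixes (renamed apart) in front of $@(M_0,\ldots,M_n)$. Evaluation contexts $E::=\mathsf{let}\ x=V\ \mathsf{in}\ [\,]\mid E[@(x_1,\ldots,x_k,[\,],M_1,\ldots,M_l)]$ ($k,l\ge0$); writing $E=\mathsf{let}\,(x'=V')^*\ \mathsf{in}\ E'$ with $E'$ not starting with a let, $E[\mathsf{let}\,(x=V)^*\ \mathsf{in}\ M]$ denotes $\mathsf{let}\,(x=V)^*\ \mathsf{in}\ \mathsf{let}\,(x'=V')^*\ \mathsf{in}\ E'[M]$ (no capture). Structural congruence $\equiv$: least equivalence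 closed under $\alpha$-renaming and the syntactic operators with $\mathsf{let}\,x_1=V_1\,\mathsf{in}\,\mathsf{let}\,x_2=V_2\,\mathsf{in}\,D\equiv\mathsf{let}\,x_2=V_2\,\mathsf{in}\,\mathsf{let}\,x_1=V_1\,\mathsf{in}\,D$ if $x_1\notin FV(V_2)$, $x_2\notin FV(V_1)$, and $\mathsf{let}\,x=V\,\mathsf{in}\,D\equiv D$ if $x\notin FV(D)$. Reduction: least relation containing $E[\mathsf{let}\,x=\lambda y_1\ldots y_n.D\ \mathsf{in}\ E'[@(x,z_1,\ldots,z_n)]]\to E[\mathsf{let}\,x=\lambda y_1\ldots y_n.D\ \mathsf{in}\ E'[[z_1/y_1,\ldots,z_n/y_n]D]]$ ($z_i$ variables) and closed under $\equiv$ on both sides. Types $A::=\langle 1\rangle\mid\langle A_1\to\cdots\to A_n\to A\rangle$ ($n\ge1$), possibly also involving a fixed distinguished result type $R$. Typing ($\Gamma$ a finite map from variables to types): $\Gamma\vdash^a x:A$ if $x:A\in\Gamma$; $\Gamma\vdash^a\mathsf{let}\,x=*\,\mathsf{in}\,D:A$ if $\Gamma,x:\langle1\rangle\vdash^a D:A$; $\Gamma\vdash^a\mathsf{let}\,x=\lambda y_1\ldots y_n.D'\,\mathsf{in}\,D:B$ if $\Gamma,y_1:A_1,\ldots,y_n:A_n\vdash^a D':C$ and $\Gamma,x:\langle A_1\to\cdots\to A_n\to C\rangle\vdash^a D:B$; $\Gamma\vdash^a @(M,N_1,\ldots,N_n):B$ if $\Gamma\vdash^a M:\langle A_1\to\cdots\to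 A_n\to B\rangle$ and $\Gamma\vdash^a N_i:A_i$ for all $i$. Sub-calculus $\lambda^{ak}$ (administrative CPS form): same reduction, structural congruence and typing rules as $\lambda^a$, restricted to values $V::=*\mid\lambda y^+.D$, declarations $D::=\mathsf{let}\,(x=V)^*\,\mathsf{in}\,M$, terms $M::=@(x,y_1,\ldots,y_n)$ (all variables, $n\ge1$), evaluation contexts $E::=\mathsf{let}\,x=V\,\mathsf{in}\,[\,]$, and types $A::=\langle1\rangle\mid\langle A_1\to\cdots\to A_n\to R\rangle$ where $R$ is a fixed result type. CPS translation: on types $\psi(\langle1\rangle)=\langle1\rangle$, $\psi(\langle A_1\to\cdots\to A_n\to B\rangle)=\langle\psi(A_1)\to\cdots\to\psi(A_n)\to K(B)\to R\rangle$ with $K(B)=\langle\psi(B)\to R\rangle$; $\psi(\Gamma)$ applies $\psi$ pointwise. On values $\psi( * )=*$, $\psi(\lambda y^+.D)=\lambda y^+\,k.(D:k)$. On declarations, for a variable $k$: $(\mathsf{let}\,x=V\,\mathsf{in}\,M):k=\mathsf{let}\,x=\psi(V)\,\mathsf{in}\,(M:k)$ (iterated over let-sequences); $@(x^*,@(M,M^+),N^* ):k=\mathsf{let}\,k'=\lambda y.(@(x^*,y,N^* ):k)\,\mathsf{in}\,(@(M,M^+):k')$ where $x^*$ is a possibly empty list of variables (including the head position) and $k',y$ are fresh; $@(x,x_1,\ldots,x_n):k=@(x,x_1,\ldots,x_n,k)$; $x:k=@(k,x)$. *)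

(* plain inductive syntax of the calculi lambda^a / lambda^ak,
   named variables (nat), alpha-equivalence handled through the structural
   congruence (which contains alpha-renaming), as in the paper. *)
From Stdlib Require Import List Arith Relations.
Import ListNotations.

Definition var := nat.

(* terms  M ::= x | @(M, M1, ..., Mn)   (n >= 1) *)
Inductive term : Type :=
| Var (x : var)
| App (m : term) (m1 : term) (ms : list term).

(* values V ::= * | \y1...yn. D  (n >= 1);   declarations D ::= let x = V in D | M *)
Inductive val : Type :=
| Star
| Lam (y : var) (ys : list var) (d : decl)
with decl : Type :=
| Let (x : var) (v : val) (d : decl)
| Ret (m : term).

(* A ::= <1> | <A1 -> ... -> An -> B> (n >= 1) | R *)
Inductive ty : Type :=
| TUnit
| TArr (A1 : ty) (As : list ty) (B : ty)
| TR.

Fixpoint tvars (t : term) : list var :=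
  match t with
  | Var x => [x]
  | App m m1 ms =>
      tvars m ++ tvars m1 ++ (fix go (l : list term) : list var :=
                                match l with [] => [] | t :: l => tvars t ++ go l end) ms
  end.

Definition tvars_list (l : list term) : list var := flat_map tvars l.

Definition remove_all (ks : list var) (l : list var) : list var :=
  filter (fun v => negb (existsb (Nat.eqb v) ks)) l.

Fixpoint fv_val (v : val) : list var :=
  match v with
  | Star => []
  | Lam y ys d => remove_all (y :: ys) (fv_decl d)
  end
with fv_decl (d : decl) : list var :=
  match d with
  | Let x v d => fv_val v ++ remove_all [x] (fv_decl d)
  | Ret m => tvars m
  end.

Fixpoint bv_val (v : val) : list var :=
  match v with
  | Star => []
  | Lam y ys d => y :: ys ++ bv_decl d
  end
with bv_decl (d : decl) : list var :=
  match d with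
  | Let x v d => x :: bv_val v ++ bv_decl d
  | Ret m => []
  end.

Definition allvars_val (v : val) : list var := fv_val v ++ bv_val v.
Definition allvars_decl (d : decl) : list var := fv_decl d ++ bv_decl d.

(* naive simultaneous substitution, stopping at rebinding binders; it is
   capture-avoiding whenever no binder of the target is in the range of the
   substitution (this side condition is imposed where it is used; general
   capture-avoiding substitution is then obtained up to alpha, i.e. up to the
   structural congruence, under which reduction is closed). *)
Fixpoint assoc (s : list (var * var)) (x : var) : var :=
  match s with
  | [] => x
  | (a, b) :: s' => if Nat.eqb a x then b else assoc s' x
  end.

Definition drop_keys (ks : list var) (s : list (var * var)) : list (var * var) :=
  filter (fun p => negb (existsb (Nat.eqb (fst p)) ks)) s.

Fixpoint subst_term (s : list (var * var)) (t : term) : term :=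
  match t with
  | Var x => Var (assoc s x)
  | App m m1 ms =>
      App (subst_term s m) (subst_term s m1)
          ((fix go (l : list term) : list term :=
              match l with [] => [] | t :: l => subst_term s t :: go l end) ms)
  end.

Fixpoint subst_val (s : list (var * var)) (v : val) : val :=
  match v with
  | Star => Star
  | Lam y ys d => Lam y ys (subst_decl (drop_keys (y :: ys) s) d)
  end
with subst_decl (s : list (var * var)) (d : decl) : decl :=
  match d with
  | Let x v d => Let x (subst_val s v) (subst_decl (drop_keys [x] s) d)
  | Ret m => Ret (subst_term s m)
  end.

(* the substitution [z1/y1, ..., zn/yn]; with repeated yi the last one wins,
   consistently with the context extension Gamma, y1:A1, ..., yn:An *)
Definition subst_of (ys zs : list var) : list (var * var) := rev (combine ys zs).

Inductive cong_val : val -> val -> Prop :=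
| cv_refl : forall v, cong_val v v
| cv_sym : forall v w, cong_val v w -> cong_val w v
| cv_trans : forall u v w, cong_val u v -> cong_val v w -> cong_val u w
| cv_lam : forall y ys d d', cong_decl d d' -> cong_val (Lam y ys d) (Lam y ys d')
| cv_alpha : forall y ys y' ys' d,
    NoDup (y' :: ys') -> length ys = length ys' ->
    (forall w, In w (y' :: ys') -> ~ In w (allvars_decl d)) ->
    cong_val (Lam y ys d) (Lam y' ys' (subst_decl (subst_of (y :: ys) (y' :: ys')) d))
with cong_decl : decl -> decl -> Prop :=
| cd_refl : forall d, cong_decl d d
| cd_sym : forall d e, cong_decl d e -> cong_decl e d
| cd_trans : forall d e f, cong_decl d e -> cong_decl e f -> cong_decl d f
| cd_let_v : forall x v v' d, cong_val v v' -> cong_decl (Let x v d) (Let x v' d)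
| cd_let_d : forall x v d d', cong_decl d d' -> cong_decl (Let x v d) (Let x v d')
| cd_alpha : forall x x' v d,
    ~ In x' (allvars_decl d) ->
    cong_decl (Let x v d) (Let x' v (subst_decl [(x, x')] d))
| cd_swap : forall x1 v1 x2 v2 d,
    x1 <> x2 -> ~ In x1 (fv_val v2) -> ~ In x2 (fv_val v1) ->
    cong_decl (Let x1 v1 (Let x2 v2 d)) (Let x2 v2 (Let x1 v1 d))
| cd_gc : forall x v d, ~ In x (fv_decl d) -> cong_decl (Let x v d) d.

Definition mkApp (m : term) (args : list term) : term :=
  match args with [] => m | a :: l => App m a l end.

(* an application frame @(x1,...,xk,[ ],M1,...,Ml):
   FHead M1 Ms  : the hole is the head (k = 0, l >= 1);
   FArg x xs Ms : head x, the hole after the variables xs (k >= 1). *)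
Inductive frame : Type :=
| FHead (m1 : term) (ms : list term)
| FArg (x : var) (xs : list var) (ms : list term).

Definition plug_frame (f : frame) (h : term) : term :=
  match f with
  | FHead m1 ms => App h m1 ms
  | FArg x xs ms => mkApp (Var x) (map Var xs ++ h :: ms)
  end.

Definition fv_frame (f : frame) : list var :=
  match f with
  | FHead m1 ms => tvars m1 ++ tvars_list ms
  | FArg x xs ms => x :: xs ++ tvars_list ms
  end.

(* E = let (x=V)* in F, with F a (possibly empty) stack of frames, outermost first *)
Record ectx : Type := { ec_lets : list (var * val); ec_frames : list frame }.

Definition lets (ls : list (var * val)) (m : term) : decl :=
  fold_right (fun p d => Let (fst p) (snd p) d) (Ret m) ls.

Fixpoint split_decl (d : decl) : list (var * val) * term :=
  match d with
  | Let x v d' => let (ls, m) := split_decl d' in ((x, v) :: ls, m)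
  | Ret m => ([], m)
  end.

Definition plug_frames (fs : list frame) (h : term) : term := fold_right plug_frame h fs.

(* E[let (x=V)* in M] := let (x'=V')* in let (x=V)* in E'[M]
   where E = let (x'=V')* in E' *)
Definition plugD (E : ectx) (d : decl) : decl :=
  let (ls, m) := split_decl d in lets (ec_lets E ++ ls) (plug_frames (ec_frames E) m).

(* "no capture": the let-bound variables floated out of the frames of E are
   not free in those frames *)
Definition plug_ok (E : ectx) (d : decl) : Prop :=
  forall x, In x (map fst (fst (split_decl d))) ->
            ~ In x (flat_map fv_frame (ec_frames E)).

(* base rule, parametrised by the admissible evaluation contexts:
   E[let x = \y1..yn.D in E'[@(x,z1,..,zn)]] -> E[let x = \y1..yn.D in E'[[z/y]D]] *)
Inductive base (P : ectx -> Prop) : decl -> decl -> Prop :=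
| base_beta : forall (E E' : ectx) (x y : var) (ys : list var) (D : decl) (z : var) (zs : list var),
    P E -> P E' ->
    length ys = length zs ->
    (* capture-avoidance of the substitution [z/y]D *)
    (forall w, In w (z :: zs) -> ~ In w (bv_decl D)) ->
    (* the x at the call site is the let-bound x, and E' captures nothing of the body *)
    ~ In x (map fst (ec_lets E')) ->
    (forall w, In w (map fst (ec_lets E')) -> ~ In w (fv_val (Lam y ys D))) ->
    (* no capture in the pluggings *)
    plug_ok E' (subst_decl (subst_of (y :: ys) (z :: zs)) D) ->
    plug_ok E (Let x (Lam y ys D) (plugD E' (Ret (App (Var x) (Var z) (map Var zs))))) ->
    plug_ok E (Let x (Lam y ys D) (plugD E' (subst_decl (subst_of (y :: ys) (z :: zs)) D))) ->
    base P
      (plugD E (Let x (Lam y ys D) (plugD E' (Ret (App (Var x) (Var z) (map Var zs))))))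
      (plugD E (Let x (Lam y ys D) (plugD E' (subst_decl (subst_of (y :: ys) (z :: zs)) D)))).

Definition red_a (D D' : decl) : Prop :=
  exists D1 D2, cong_decl D D1 /\ base (fun _ => True) D1 D2 /\ cong_decl D2 D'.

Fixpoint ak_val (v : val) : Prop :=
  match v with
  | Star => True
  | Lam y ys d => ak_decl d
  end
with ak_decl (d : decl) : Prop :=
  match d with
  | Let x v d => ak_val v /\ ak_decl d
  | Ret m => exists x y ys, m = App (Var x) (Var y) (map Var ys)
  end.

(* reduction of lambda^ak: same rule, restricted to lambda^ak syntax and to the
   lambda^ak evaluation contexts let (x=V)* in [ ] (no frames) *)
Definition red_ak (D D' : decl) : Prop :=
  ak_decl D /\ ak_decl D' /\
  exists D1 D2, ak_decl D1 /\ ak_decl D2 /\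
    cong_decl D D1 /\ base (fun E => ec_frames E = []) D1 D2 /\ cong_decl D2 D'.

Definition tctx := list (var * ty).   (* most recent binding first *)

Fixpoint lookup (G : tctx) (x : var) : option ty :=
  match G with
  | [] => None
  | (y, A) :: G' => if Nat.eqb y x then Some A else lookup G' x
  end.

Definition extend (G : tctx) (ys : list var) (As : list ty) : tctx :=
  rev (combine ys As) ++ G.

Inductive has_type_t : tctx -> term -> ty -> Prop :=
| T_var : forall G x A, lookup G x = Some A -> has_type_t G (Var x) A
| T_app : forall G M N1 Ns A1 As B,
    has_type_t G M (TArr A1 As B) ->
    has_type_t G N1 A1 ->
    Forall2 (has_type_t G) Ns As ->
    has_type_t G (App M N1 Ns) B.

Inductive has_type_d : tctx -> decl -> ty -> Prop :=
| T_ret : forall G M A, has_type_t G M A -> has_type_d G (Ret M) A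
| T_let_star : forall G x D A,
    has_type_d ((x, TUnit) :: G) D A -> has_type_d G (Let x Star D) A
| T_let_lam : forall G x y ys D' D A1 As C B,
    length ys = length As ->
    has_type_d (extend G (y :: ys) (A1 :: As)) D' C ->
    has_type_d ((x, TArr A1 As C) :: G) D B ->
    has_type_d G (Let x (Lam y ys D') D) B.

Fixpoint psi (A : ty) : ty :=
  match A with
  | TUnit => TUnit
  | TArr A1 As B =>
      TArr (psi A1)
           ((fix go (l : list ty) : list ty :=
               match l with [] => [] | a :: l => psi a :: go l end) As
            ++ [TArr (psi B) [] TR])
           TR
  | TR => TR
  end.

Definition Kty (B : ty) : ty := TArr (psi B) [] TR.

Definition psi_ctx (G : tctx) : tctx := map (fun p => (fst p, psi (snd p))) G.

Definition fresh (l : list var) : var := S (list_max l).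

Fixpoint size (t : term) : nat :=
  match t with
  | Var _ => 1
  | App m m1 ms =>
      S (size m + size m1 + (fix go (l : list term) : nat :=
                               match l with [] => 0 | t :: l => size t + go l end) ms)
  end.

(* cps_app n acc rest k  computes  @(acc, rest) : k,
   where acc is the (nonempty unless at start) list of leading variables x*
   already scanned; n is fuel (always sufficient, see cps_term). *)
Fixpoint cps_app (n : nat) (acc : list var) (rest : list term) (k : var) : decl :=
  match n with
  | 0 => Ret (Var k)
  | S n' =>
      match rest with
      | [] =>
          match acc with
          | x :: xs => Ret (mkApp (Var x) (map Var (xs ++ [k])))
          | [] => Ret (Var k)
          end
      | Var v :: rest' => cps_app n' (acc ++ [v]) rest' k
      | App m m1 ms :: rest' =>
          (* @(xs, @(M,Ms), Ns) : k =
             let k' = \y.(@(xs,y,Ns) : k) in (@(M,Ms) : k')   with k', y fresh *)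
          let y := fresh (k :: acc ++ tvars_list rest) in
          let k' := S y in
          Let k' (Lam y [] (cps_app n' (acc ++ [y]) rest' k))
                 (cps_app n' [] (m :: m1 :: ms) k')
      end
  end.

Definition cps_term (t : term) (k : var) : decl :=
  match t with
  | Var x => Ret (App (Var k) (Var x) [])
  | App m m1 ms => cps_app (size t) [] (m :: m1 :: ms) k
  end.

Fixpoint cps_val (v : val) : val :=
  match v with
  | Star => Star
  | Lam y ys d =>
      let k := fresh (y :: ys ++ allvars_decl d) in
      Lam y (ys ++ [k]) (cps_decl d k)
  end
with cps_decl (d : decl) (k : var) : decl :=
  match d with
  | Let x v d => Let x (cps_val v) (cps_decl d k)
  | Ret m => cps_term m k
  end.

(* The translation [cps_decl] picks its administrative names (continuations and their
   parameters) by a fixed recipe, which is stable neither under substitution nor under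
   structural congruence.  We therefore describe the translation by a relation admitting every
   suitably fresh choice of these names: [cps_decl] computes one instance, and any two instances
   are alpha-equivalent, hence structurally congruent.

   For (2), the relation respects structural
   congruence, so it suffices to simulate one base step.  Translating its redex, the evaluation
   frames become continuation bindings and the call becomes [@(x, z, zs, kn)] with [kn] the
   continuation of the hole; one lambda^ak step replaces it by the translated body, up to
   reordering of independent let-bindings.  When the body returns a variable inside a frame, a
   second step applies that frame's continuation to it.  The continuation [k] of the statement
   may clash with bound names of the reducts, so the simulation is carried out for a fresh
   continuation and transported to [k] by a swapping renaming. *)

From Stdlib Require Import List Relations Arith Lia.
Import ListNotations.

Section TermInduction.
Variable P : term -> Prop.
Hypothesis HV : forall x, P (Var x).
Hypothesis HA : forall m m1 ms, P m -> P m1 -> Forall P ms -> P (App m m1 ms).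
Fixpoint term_ind_nested (t : term) : P t :=
  match t with
  | Var x => HV x
  | App m m1 ms => HA m m1 ms (term_ind_nested m) (term_ind_nested m1)
      ((fix go (l : list term) : Forall P l :=
          match l with [] => Forall_nil _ | t :: l => Forall_cons _ (term_ind_nested t) (go l) end) ms)
  end.
End TermInduction.

Scheme val_ind2 := Induction for val Sort Prop with decl_ind2 := Induction for decl Sort Prop.
Combined Scheme vd_mutind from val_ind2, decl_ind2.

Lemma tvars_App m m1 ms : tvars (App m m1 ms) = tvars m ++ tvars m1 ++ tvars_list ms.
Proof. reflexivity. Qed.

Lemma subst_App s m m1 ms : subst_term s (App m m1 ms) = App (subst_term s m) (subst_term s m1) (map (subst_term s) ms).
Proof. reflexivity. Qed.

Definition lsize (l : list term) : nat := list_sum (map size l).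

Lemma size_App m m1 ms : size (App m m1 ms) = S (size m + size m1 + lsize ms).
Proof. simpl. f_equal. f_equal. unfold lsize. induction ms; simpl; [reflexivity| now rewrite IHms]. Qed.

Lemma size_pos t : 1 <= size t.
Proof. destruct t; simpl; lia. Qed.

Lemma tvars_list_cons t l : tvars_list (t :: l) = tvars t ++ tvars_list l.
Proof. reflexivity. Qed.
Lemma tvars_list_app l1 l2 : tvars_list (l1 ++ l2) = tvars_list l1 ++ tvars_list l2.
Proof. unfold tvars_list. apply flat_map_app. Qed.
Lemma tvars_list_mapVar xs : tvars_list (map Var xs) = xs.
Proof. induction xs; simpl; auto. rewrite IHxs. reflexivity. Qed.

Lemma fresh_gt l x : In x l -> x < fresh l.
Proof.
  unfold fresh. intros H. assert (x <= list_max l).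
  { induction l; simpl in *; [contradiction|]. destruct H; subst; lia || (specialize (IHl H); lia). }
  lia.
Qed.
Lemma fresh_notin l : ~ In (fresh l) l.
Proof. intros H. apply fresh_gt in H. lia. Qed.
Lemma existsb_eqb_In a ks : existsb (Nat.eqb a) ks = true <-> In a ks.
Proof.
  rewrite existsb_exists. split.
  - intros [y [Hy He]]. apply Nat.eqb_eq in He. subst. auto.
  - intros H. exists a. split; auto. apply Nat.eqb_refl.
Qed.

Lemma In_remove_all v ks l : In v (remove_all ks l) <-> In v l /\ ~ In v ks.
Proof.
  unfold remove_all. rewrite filter_In. rewrite Bool.negb_true_iff.
  split; intros [H1 H2]; split; auto.
  - intros H. apply existsb_eqb_In in H. congruence.
  - destruct (existsb (Nat.eqb v) ks) eqn:E; auto. apply existsb_eqb_In in E. contradiction.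
Qed.

Lemma assoc_drop_in ks s v : In v ks -> assoc (drop_keys ks s) v = v.
Proof.
  intros H. induction s as [|[a b] s IH]; simpl; auto.
  unfold drop_keys in *. simpl.
  destruct (existsb (Nat.eqb a) ks) eqn:E; simpl; auto.
  destruct (Nat.eqb a v) eqn:E2; auto.
  apply Nat.eqb_eq in E2. subst. apply existsb_eqb_In in H. congruence.
Qed.

Lemma assoc_drop_notin ks s v : ~ In v ks -> assoc (drop_keys ks s) v = assoc s v.
Proof.
  intros H. induction s as [|[a b] s IH]; simpl; auto.
  unfold drop_keys in *. simpl.
  destruct (existsb (Nat.eqb a) ks) eqn:E; simpl.
  - destruct (Nat.eqb a v) eqn:E2; auto.
    apply Nat.eqb_eq in E2. subst. apply existsb_eqb_In in E. contradiction.
  - destruct (Nat.eqb a v); auto.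
Qed.

Lemma subst_term_ext s1 s2 t : (forall v, In v (tvars t) -> assoc s1 v = assoc s2 v) ->
  subst_term s1 t = subst_term s2 t.
Proof.
  induction t using term_ind_nested; intros Hs.
  - simpl. f_equal. apply Hs. simpl; auto.
  - rewrite !subst_App. rewrite tvars_App in Hs. f_equal.
    + apply IHt1. intros; apply Hs; apply in_or_app; auto.
    + apply IHt2. intros; apply Hs; apply in_or_app; right; apply in_or_app; auto.
    + assert (Hs' : forall v, In v (tvars_list ms) -> assoc s1 v = assoc s2 v).
      { intros; apply Hs; apply in_or_app; right; apply in_or_app; auto. }
      clear Hs. induction H; simpl; auto. rewrite tvars_list_cons in Hs'. f_equal.
      * apply H. intros; apply Hs'; apply in_or_app; auto.
      * apply IHForall. intros; apply Hs'; apply in_or_app; auto.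
Qed.

Lemma subst_ext :
  (forall v s1 s2, (forall x, In x (fv_val v) -> assoc s1 x = assoc s2 x) -> subst_val s1 v = subst_val s2 v) /\
  (forall d s1 s2, (forall x, In x (fv_decl d) -> assoc s1 x = assoc s2 x) -> subst_decl s1 d = subst_decl s2 d).
Proof.
  apply (vd_mutind (fun v => forall s1 s2, (forall x, In x (fv_val v) -> assoc s1 x = assoc s2 x) -> subst_val s1 v = subst_val s2 v)
                  (fun d => forall s1 s2, (forall x, In x (fv_decl d) -> assoc s1 x = assoc s2 x) -> subst_decl s1 d = subst_decl s2 d)); simpl; intros.
  - reflexivity.
  - f_equal. apply H. intros x Hx.
    destruct (in_dec Nat.eq_dec x (y :: ys)).
    + rewrite !assoc_drop_in; auto.
    + rewrite !assoc_drop_notin; auto. apply H0. apply In_remove_all. auto.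
  - f_equal.
    + apply H. intros; apply H1; apply in_or_app; auto.
    + apply H0. intros x0 Hx.
      destruct (Nat.eq_dec x0 x).
      * subst. rewrite !assoc_drop_in; simpl; auto.
      * rewrite !assoc_drop_notin; simpl; try (intuition congruence). apply H1. apply in_or_app. right.
        apply In_remove_all. simpl. split; auto. intros [E|E]; [congruence|contradiction].
  - f_equal. apply subst_term_ext. auto.
Qed.

Lemma subst_term_nil t : subst_term [] t = t.
Proof.
  induction t using term_ind_nested; [reflexivity|].
  rewrite subst_App. f_equal; auto. induction H; simpl; f_equal; auto.
Qed.

Lemma subst_term_id s t : (forall x, In x (tvars t) -> assoc s x = x) -> subst_term s t = t.
Proof.
  intros H. transitivity (subst_term [] t); [|apply subst_term_nil]. apply subst_term_ext. auto.
Qed.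

Lemma tvars_subst s t : tvars (subst_term s t) = map (assoc s) (tvars t).
Proof.
  induction t using term_ind_nested; [reflexivity|].
  rewrite subst_App, !tvars_App, !map_app. f_equal; auto. f_equal; auto.
  induction H; simpl; auto. rewrite map_app. f_equal; auto.
Qed.

Lemma tvars_list_subst s l : tvars_list (map (subst_term s) l) = map (assoc s) (tvars_list l).
Proof. induction l; simpl; auto. rewrite map_app, tvars_subst. f_equal. auto. Qed.

Lemma fv_subst :
  (forall v s w, In w (fv_val (subst_val s v)) -> exists x, In x (fv_val v) /\ w = assoc s x) /\
  (forall d s w, In w (fv_decl (subst_decl s d)) -> exists x, In x (fv_decl d) /\ w = assoc s x).
Proof.
  apply (vd_mutind (fun v => forall s w, In w (fv_val (subst_val s v)) -> exists x, In x (fv_val v) /\ w = assoc s x)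
                  (fun d => forall s w, In w (fv_decl (subst_decl s d)) -> exists x, In x (fv_decl d) /\ w = assoc s x)); simpl; intros.
  - contradiction.
  - apply In_remove_all in H0. destruct H0 as [H1 H2].
    destruct (H _ _ H1) as [x [Hx E]].
    destruct (in_dec Nat.eq_dec x (y :: ys)).
    + rewrite assoc_drop_in in E; auto. subst. contradiction.
    + rewrite assoc_drop_notin in E; auto. exists x. split; auto. apply In_remove_all. auto.
  - apply in_app_or in H1. destruct H1 as [H1|H1].
    + destruct (H _ _ H1) as [x0 [? ?]]. exists x0. split; auto. apply in_or_app. auto.
    + apply In_remove_all in H1. destruct H1 as [H1 H2].
      destruct (H0 _ _ H1) as [x0 [Hx E]].
      destruct (Nat.eq_dec x0 x).
      * subst. rewrite assoc_drop_in in H2; simpl; auto. exfalso; apply H2; simpl; auto.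
      * rewrite assoc_drop_notin in E; simpl; [|intuition].
        exists x0. split; auto. apply in_or_app. right. apply In_remove_all. simpl. intuition.
  - rewrite tvars_subst in H. apply in_map_iff in H. destruct H as [x [E H]]. eauto.
Qed.

Lemma assoc_in_range s v : assoc s v = v \/ In (assoc s v) (map snd s).
Proof.
  induction s as [|[a b] s IH]; simpl; auto.
  destruct (Nat.eqb a v); auto. destruct IH; auto.
Qed.

Lemma combine_app_length {A B} (l1 l2 : list A) (l1' l2' : list B) : length l1 = length l1' ->
  combine (l1 ++ l2) (l1' ++ l2') = combine l1 l1' ++ combine l2 l2'.
Proof. revert l1'. induction l1; destruct l1'; simpl; intros; try discriminate; auto. f_equal. auto. Qed.

Lemma subst_of_snoc l l' a b : length l = length l' ->
  subst_of (l ++ [a]) (l' ++ [b]) = (a, b) :: subst_of l l'.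
Proof.
  intros H. unfold subst_of. rewrite combine_app_length by auto. simpl. rewrite rev_app_distr. reflexivity.
Qed.

Lemma map_snd_subst_of l l' : length l = length l' -> map snd (subst_of l l') = rev l'.
Proof.
  intros H. unfold subst_of. rewrite map_rev. f_equal.
  revert l' H. induction l; destruct l'; simpl; intros; try discriminate; auto.
  f_equal. auto.
Qed.

Lemma assoc_subst_of_range l l' v : length l = length l' ->
  assoc (subst_of l l') v = v \/ In (assoc (subst_of l l') v) l'.
Proof.
  intros H. destruct (assoc_in_range (subst_of l l') v); auto.
  rewrite map_snd_subst_of in H0 by auto. right. apply in_rev. auto.
Qed.

Lemma tvars_Var x : tvars (Var x) = [x].
Proof. reflexivity. Qed.
Global Arguments tvars_list : simpl never.
Global Arguments tvars : simpl never.
Lemma tvars_list_nil : tvars_list [] = [].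
Proof. reflexivity. Qed.
Global Hint Rewrite tvars_App tvars_Var tvars_list_cons tvars_list_nil tvars_list_app tvars_list_mapVar : tv.

(** * The CPS translation as a relation *)

(* [is_cps_app acc rest k C] holds when [C] is [@(acc, rest) : k] for SOME choice of the
   administrative names [k'], [y] of the context; [cps_app] is one such choice.  Unlike the
   function, the relation is stable under renaming and substitution. *)
Inductive is_cps_app : list var -> list term -> var -> decl -> Prop :=
| cpsa_done : forall x xs k, is_cps_app (x :: xs) [] k (Ret (mkApp (Var x) (map Var (xs ++ [k]))))
| cpsa_var : forall acc v rest k C, is_cps_app (acc ++ [v]) rest k C -> is_cps_app acc (Var v :: rest) k C
| cpsa_app : forall acc m m1 ms rest k y k' C1 C2,
    ~ In y (k :: acc ++ tvars_list rest) ->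
    ~ In k' (tvars_list (m :: m1 :: ms)) ->
    is_cps_app (acc ++ [y]) rest k C1 ->
    is_cps_app [] (m :: m1 :: ms) k' C2 ->
    is_cps_app acc (App m m1 ms :: rest) k (Let k' (Lam y [] C1) C2).

Inductive is_cps_term : term -> var -> decl -> Prop :=
| cpst_var : forall x k, is_cps_term (Var x) k (Ret (App (Var k) (Var x) []))
| cpst_app : forall m m1 ms k C, is_cps_app [] (m :: m1 :: ms) k C -> is_cps_term (App m m1 ms) k C.

Inductive is_cps_val : val -> val -> Prop :=
| cpsv_star : is_cps_val Star Star
| cpsv_lam : forall y ys d k0 C, ~ In k0 (y :: ys) -> ~ In k0 (fv_decl d) -> is_cps_decl d k0 C ->
    is_cps_val (Lam y ys d) (Lam y (ys ++ [k0]) C)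
with is_cps_decl : decl -> var -> decl -> Prop :=
| cpsd_ret : forall m k C, is_cps_term m k C -> is_cps_decl (Ret m) k C
| cpsd_let : forall x v d k V C, x <> k -> is_cps_val v V -> is_cps_decl d k C -> is_cps_decl (Let x v d) k (Let x V C).
Scheme is_cps_val_ind2 := Induction for is_cps_val Sort Prop with is_cps_decl_ind2 := Induction for is_cps_decl Sort Prop.
Combined Scheme is_cps_mutind from is_cps_val_ind2, is_cps_decl_ind2.

Lemma lsize_cons t l : lsize (t :: l) = size t + lsize l.
Proof. reflexivity. Qed.

Lemma tvars_mkApp_vars x l : tvars (mkApp (Var x) (map Var l)) = x :: l.
Proof. destruct l as [|a l]; [reflexivity|].
  change (tvars (App (Var x) (Var a) (map Var l)) = x :: a :: l). rewrite tvars_App, tvars_list_mapVar. reflexivity. Qed.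

Lemma subst_mkApp_vars s x l : subst_term s (mkApp (Var x) (map Var l)) = mkApp (Var (assoc s x)) (map Var (map (assoc s) l)).
Proof.
  destruct l as [|a l]; [reflexivity|].
  change (subst_term s (App (Var x) (Var a) (map Var l)) = App (Var (assoc s x)) (Var (assoc s a)) (map Var (map (assoc s) l))).
  rewrite subst_App. f_equal. rewrite !map_map. reflexivity.
Qed.

Lemma map_assoc_id s l : (forall v, In v l -> assoc s v = v) -> map (assoc s) l = l.
Proof. induction l; simpl; intros; auto. f_equal; auto. Qed.

Lemma map_subst_id s l : (forall v, In v (tvars_list l) -> assoc s v = v) -> map (subst_term s) l = l.
Proof.
  induction l; simpl; intros; auto. f_equal.
  - apply subst_term_id. intros; apply H; apply in_or_app; auto.
  - apply IHl. intros; apply H; apply in_or_app; auto.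
Qed.

Lemma map_subst_ext s1 s2 l : (forall v, In v (tvars_list l) -> assoc s1 v = assoc s2 v) ->
  map (subst_term s1) l = map (subst_term s2) l.
Proof.
  induction l; simpl; intros; auto. f_equal.
  - apply subst_term_ext. intros; apply H; apply in_or_app; auto.
  - apply IHl. intros; apply H; apply in_or_app; auto.
Qed.

Lemma map_assoc_ext s1 s2 l : (forall v, In v l -> assoc s1 v = assoc s2 v) ->
  map (assoc s1) l = map (assoc s2) l.
Proof. induction l; simpl; intros; auto. f_equal; auto. Qed.

Lemma assoc1 a b v : assoc [(a, b)] v = if Nat.eqb a v then b else v.
Proof. reflexivity. Qed.

Lemma ak_ret_vars x l : l <> [] -> ak_decl (Ret (mkApp (Var x) (map Var l))).
Proof. destruct l; [congruence|]. intros _. simpl. eauto. Qed.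

Lemma is_cps_app_ak acc rest k C : is_cps_app acc rest k C -> ak_decl C.
Proof.
  induction 1; simpl; auto.
  - apply ak_ret_vars. destruct xs; simpl; congruence.
Qed.

Lemma is_cps_ak : (forall v V, is_cps_val v V -> ak_val V) /\ (forall d k C, is_cps_decl d k C -> ak_decl C).
Proof.
  apply is_cps_mutind; simpl; auto.
  intros m k C [x k'|m' m1 ms k' C' Hc]; [simpl; exists k', x, []; reflexivity | eapply is_cps_app_ak; eauto].
Qed.

Lemma ak_subst : (forall v, ak_val v -> forall s, ak_val (subst_val s v)) /\ (forall d, ak_decl d -> forall s, ak_decl (subst_decl s d)).
Proof.
  apply (vd_mutind (fun v => ak_val v -> forall s, ak_val (subst_val s v)) (fun d => ak_decl d -> forall s, ak_decl (subst_decl s d))); simpl; intros; auto.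
  - destruct H1; split; auto.
  - destruct H as [x [y [ys E]]]. subst. rewrite subst_App. simpl.
    exists (assoc s x), (assoc s y), (map (assoc s) ys). f_equal. rewrite !map_map. reflexivity.
Qed.

Lemma is_cps_app_fv acc rest k C : is_cps_app acc rest k C -> forall w, In w (fv_decl C) -> In w (k :: acc ++ tvars_list rest).
Proof.
  induction 1; intros w Hw.
  - simpl in Hw. rewrite tvars_mkApp_vars in Hw. simpl in Hw |- *.
    destruct Hw as [Hw|Hw]; [right; left; auto|].
    apply in_app_or in Hw. destruct Hw as [Hw|[Hw|[]]]; auto. right; right; rewrite app_nil_r; auto.
  - apply IHis_cps_app in Hw. simpl in *. rewrite <- app_assoc in Hw. simpl in Hw. auto.
  - simpl in Hw. apply in_app_or in Hw. destruct Hw as [Hw|Hw].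
    + apply In_remove_all in Hw. destruct Hw as [Hw Hn]. apply IHis_cps_app1 in Hw.
      simpl in Hw |- *. rewrite <- app_assoc in Hw. simpl in Hw.
      destruct Hw as [Hw|Hw]; auto. right.
      apply in_app_or in Hw. destruct Hw as [Hw|[Hw|Hw]]; [apply in_or_app; auto| exfalso; apply Hn; simpl; auto|].
      apply in_or_app. right. rewrite tvars_list_cons, tvars_App. apply in_or_app. right. auto.
    + apply In_remove_all in Hw. destruct Hw as [Hw Hn]. apply IHis_cps_app2 in Hw.
      simpl in Hw. destruct Hw as [Hw|Hw]; [exfalso; apply Hn; simpl; auto|].
      right. apply in_or_app. right. rewrite tvars_list_cons. apply in_or_app. left.
      rewrite tvars_App. rewrite !tvars_list_cons in Hw. exact Hw.
Qed.

Lemma is_cps_term_fv m k C : is_cps_term m k C -> forall w, In w (fv_decl C) -> w = k \/ In w (tvars m).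
Proof.
  destruct 1; intros w Hw.
  - simpl in Hw. autorewrite with tv in Hw. simpl in Hw. rewrite tvars_Var. simpl. intuition.
  - apply (is_cps_app_fv _ _ _ _ H) in Hw. simpl in Hw. autorewrite with tv in *. simpl in Hw. destruct Hw; [left; congruence|right; auto].
Qed.

Lemma is_cps_fv : (forall v V, is_cps_val v V -> forall w, In w (fv_val V) -> In w (fv_val v)) /\
               (forall d k C, is_cps_decl d k C -> forall w, In w (fv_decl C) -> w = k \/ In w (fv_decl d)).
Proof.
  apply is_cps_mutind; simpl; intros; auto.
  - apply In_remove_all in H0. destruct H0 as [H1 H2]. apply H in H1. destruct H1.
    + subst. exfalso. apply H2. simpl. right. apply in_or_app. simpl; auto.
    + apply In_remove_all. split; auto. intros Hc; apply H2. simpl in Hc |- *. destruct Hc; auto.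
      right; apply in_or_app; auto.
  - eapply is_cps_term_fv; eauto.
  - apply in_app_or in H1. destruct H1 as [H1|H1].
    + right. apply in_or_app. auto.
    + apply In_remove_all in H1. destruct H1 as [H1 H2]. apply H0 in H1. destruct H1; auto.
      right. apply in_or_app. right. apply In_remove_all. auto.
Qed.

(* For [b] in [l], only [b] itself is sent to [b]: the substitution captures no binder of [l]. *)
Definition subst_avoids (s : list (var * var)) (l : list var) := forall b, In b l -> forall v, v <> b -> assoc s v <> b.

Lemma subst_avoids_drop s l ks : subst_avoids s l -> subst_avoids (drop_keys ks s) l.
Proof.
  intros H b Hb v Hv. destruct (in_dec Nat.eq_dec v ks).
  - rewrite assoc_drop_in; auto.
  - rewrite assoc_drop_notin; auto.
Qed.

Lemma subst_avoids_incl s l l' : subst_avoids s l -> (forall b, In b l' -> In b l) -> subst_avoids s l'.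
Proof. intros H H' b Hb. apply H. auto. Qed.

Lemma is_cps_app_subst acc rest k C : is_cps_app acc rest k C -> forall s, subst_avoids s (bv_decl C) ->
  is_cps_app (map (assoc s) acc) (map (subst_term s) rest) (assoc s k) (subst_decl s C).
Proof.
  induction 1; intros s Hs.
  - simpl. rewrite subst_mkApp_vars, map_app. simpl. constructor.
  - simpl. constructor. specialize (IHis_cps_app s Hs). rewrite map_app in IHis_cps_app. exact IHis_cps_app.
  - simpl in Hs.
    assert (Hy : In y (bv_decl (Let k' (Lam y [] C1) C2))) by (simpl; auto).
    assert (Hk : In k' (bv_decl (Let k' (Lam y [] C1) C2))) by (simpl; auto).
    change (subst_decl s (Let k' (Lam y [] C1) C2)) with
      (Let k' (Lam y [] (subst_decl (drop_keys [y] s) C1)) (subst_decl (drop_keys [k'] s) C2)).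
    cbn [map]. rewrite subst_App.
    assert (E1 : map (assoc (drop_keys [y] s)) (acc ++ [y]) = map (assoc s) acc ++ [y]).
    { rewrite map_app. simpl. rewrite assoc_drop_in by (simpl; auto). f_equal.
      apply map_assoc_ext. intros v Hv. apply assoc_drop_notin. simpl. intros [E|[]]; subst; apply H; simpl; right; apply in_or_app; auto. }
    assert (E2 : map (subst_term (drop_keys [y] s)) rest = map (subst_term s) rest).
    { apply map_subst_ext. intros v Hv. apply assoc_drop_notin. simpl. intros [E|[]]; subst; apply H; simpl; right; apply in_or_app; auto. }
    assert (E3 : assoc (drop_keys [y] s) k = assoc s k).
    { apply assoc_drop_notin. simpl. intros [E|[]]; subst; apply H; simpl; auto. }
    assert (E4 : map (subst_term (drop_keys [k'] s)) (m :: m1 :: ms) = map (subst_term s) (m :: m1 :: ms)).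
    { apply map_subst_ext. intros v Hv. apply assoc_drop_notin. simpl. intros [E|[]]; subst; auto. }
    assert (E5 : assoc (drop_keys [k'] s) k' = k') by (apply assoc_drop_in; simpl; auto).
    specialize (IHis_cps_app1 (drop_keys [y] s)). specialize (IHis_cps_app2 (drop_keys [k'] s)).
    rewrite E1, E2, E3 in IHis_cps_app1. rewrite E4, E5 in IHis_cps_app2. simpl in IHis_cps_app2.
    apply cpsa_app; auto.
    + simpl. rewrite tvars_list_subst. intros [Hc|Hc].
      * eapply (Hs y Hy k); [|exact Hc]. intro Heq; subst k; apply H; simpl; auto.
      * apply in_app_or in Hc. destruct Hc as [Hc|Hc]; apply in_map_iff in Hc; destruct Hc as [v [Ev Hv]];
          (eapply (Hs y Hy v); [|exact Ev]); intro Heq; subst v; apply H; simpl; right; apply in_or_app; auto.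
    + rewrite <- map_cons, <- map_cons, tvars_list_subst. intros Hc. apply in_map_iff in Hc.
      destruct Hc as [v [Ev Hv]]. eapply (Hs k' Hk v); [|exact Ev]. intro Heq; subst v; auto.
    + apply IHis_cps_app1. apply subst_avoids_drop. eapply subst_avoids_incl; eauto. intros; simpl; right; right; apply in_or_app; auto.
    + apply IHis_cps_app2. apply subst_avoids_drop. eapply subst_avoids_incl; eauto. intros; simpl; right; right; apply in_or_app; auto.
Qed.

Lemma is_cps_term_subst m k C : is_cps_term m k C -> forall s, subst_avoids s (bv_decl C) ->
  is_cps_term (subst_term s m) (assoc s k) (subst_decl s C).
Proof.
  destruct 1; intros s Hs.
  - simpl. constructor.
  - rewrite subst_App. constructor. apply (is_cps_app_subst _ _ _ _ H s Hs).
Qed.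

Lemma is_cps_subst :
  (forall v V, is_cps_val v V -> forall s, subst_avoids s (bv_val V) -> is_cps_val (subst_val s v) (subst_val s V)) /\
  (forall d k C, is_cps_decl d k C -> forall s, subst_avoids s (bv_decl C) -> is_cps_decl (subst_decl s d) (assoc s k) (subst_decl s C)).
Proof.
  apply is_cps_mutind; intros.
  - constructor.
  - simpl. simpl in H0.
    assert (Hk : In k0 (y :: (ys ++ [k0]) ++ bv_decl C)) by (simpl; right; apply in_or_app; left; apply in_or_app; simpl; auto).
    specialize (H (drop_keys (y :: ys ++ [k0]) s)).
    rewrite assoc_drop_in in H by (simpl; right; apply in_or_app; simpl; auto).
    assert (E : subst_decl (drop_keys (y :: ys ++ [k0]) s) d = subst_decl (drop_keys (y :: ys) s) d).
    { apply subst_ext. intros x Hx. destruct (in_dec Nat.eq_dec x (y :: ys)) as [Hin|ni].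
      - rewrite (assoc_drop_in (y :: ys ++ [k0])), (assoc_drop_in (y :: ys)); auto.
        simpl in Hin |- *. destruct Hin; auto. right. apply in_or_app. auto.
      - rewrite !assoc_drop_notin; auto. simpl. intros [E|E]; [apply ni; simpl; auto|].
        apply in_app_or in E. destruct E as [E|[E|[]]]; [apply ni; simpl; auto| subst; contradiction]. }
    rewrite E in H. constructor; auto.
    + intros Hc. apply fv_subst in Hc. destruct Hc as [x [Hx Ex]].
      destruct (in_dec Nat.eq_dec x (y :: ys)) as [Hin|ni].
      * rewrite assoc_drop_in in Ex; auto. subst. contradiction.
      * rewrite assoc_drop_notin in Ex; auto. eapply (H0 k0 Hk x); [|exact (eq_sym Ex)]. intro Heq; subst x; contradiction.
    + apply H. apply subst_avoids_drop. eapply subst_avoids_incl; eauto. intros; simpl; right; apply in_or_app; auto.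
  - simpl. constructor. apply is_cps_term_subst; auto.
  - simpl. simpl in H1.
    assert (E : assoc (drop_keys [x] s) k = assoc s k) by (apply assoc_drop_notin; simpl; intuition).
    constructor.
    + intro Hc. apply (H1 x (or_introl eq_refl) k); auto.
    + apply H. eapply subst_avoids_incl; eauto. intros; simpl; right; apply in_or_app; auto.
    + rewrite <- E. apply H0. apply subst_avoids_drop. eapply subst_avoids_incl; eauto. intros; simpl; right; apply in_or_app; auto.
Qed.

Lemma subst_avoids_subst_of xs zs l : length xs = length zs ->
  (forall w, In w zs -> ~ In w l) -> subst_avoids (subst_of xs zs) l.
Proof.
  intros Hlen Hzs b Hb v Hvb E.
  destruct (assoc_subst_of_range xs zs v Hlen) as [E'|E']; [congruence|].
  rewrite E in E'. exact (Hzs b E' Hb).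
Qed.

Lemma is_cps_decl_subst_params d k C xs zs k' :
  is_cps_decl d k C -> ~ In k (fv_decl d) -> length xs = length zs ->
  (forall w, In w (zs ++ [k']) -> ~ In w (bv_decl C)) ->
  is_cps_decl (subst_decl (subst_of xs zs) d) k' (subst_decl (subst_of (xs ++ [k]) (zs ++ [k'])) C).
Proof.
  intros HC Hk Hlen Hzs.
  assert (Hs : subst_avoids (subst_of (xs ++ [k]) (zs ++ [k'])) (bv_decl C))
    by (apply subst_avoids_subst_of; [rewrite !length_app; simpl; lia | exact Hzs]).
  pose proof (proj2 is_cps_subst _ _ _ HC _ Hs) as H.
  rewrite subst_of_snoc in H |- * by exact Hlen.
  cbn [assoc] in H. rewrite Nat.eqb_refl in H.
  replace (subst_decl (subst_of xs zs) d) with (subst_decl ((k, k') :: subst_of xs zs) d); [exact H|].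
  apply subst_ext. intros x Hx. cbn [assoc].
  destruct (Nat.eqb k x) eqn:E; auto. apply Nat.eqb_eq in E. subst. contradiction.
Qed.

Lemma allvars_let_body x v d w : In w (allvars_decl d) -> In w (allvars_decl (Let x v d)).
Proof.
  unfold allvars_decl. simpl. intros H. apply in_app_or in H. destruct H as [H|H].
  - destruct (Nat.eq_dec w x).
    + subst. apply in_or_app. right. simpl. auto.
    + apply in_or_app. left. apply in_or_app. right. apply In_remove_all. simpl. intuition.
  - apply in_or_app. right. simpl. right. apply in_or_app. auto.
Qed.

Lemma allvars_let_val x v d w : In w (allvars_val v) -> In w (allvars_decl (Let x v d)).
Proof.
  unfold allvars_decl, allvars_val. simpl. intros H. apply in_app_or in H. destruct H as [H|H].
  - apply in_or_app. left. apply in_or_app. auto.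
  - apply in_or_app. right. simpl. right. apply in_or_app. auto.
Qed.

Lemma allvars_let_var x v d : In x (allvars_decl (Let x v d)).
Proof. unfold allvars_decl. simpl. apply in_or_app. right. simpl. auto. Qed.

Lemma allvars_lam_body y ys d w : In w (allvars_decl d) -> In w (allvars_val (Lam y ys d)).
Proof.
  unfold allvars_decl, allvars_val. simpl. intros H. apply in_app_or in H. destruct H as [H|H].
  - destruct (in_dec Nat.eq_dec w (y :: ys)).
    + apply in_or_app. right. simpl in i |- *. destruct i; auto. right. apply in_or_app. auto.
    + apply in_or_app. left. apply In_remove_all. auto.
  - apply in_or_app. right. simpl. right. apply in_or_app. auto.
Qed.

Lemma allvars_lam_params y ys d w : In w (y :: ys) -> In w (allvars_val (Lam y ys d)).
Proof.
  unfold allvars_val. simpl. intros H. apply in_or_app. right. simpl in H |- *.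
  destruct H; auto. right. apply in_or_app. auto.
Qed.

Lemma fv_allvars_decl d w : In w (fv_decl d) -> In w (allvars_decl d).
Proof. unfold allvars_decl. intros. apply in_or_app. auto. Qed.
Lemma bv_allvars_decl d w : In w (bv_decl d) -> In w (allvars_decl d).
Proof. unfold allvars_decl. intros. apply in_or_app. auto. Qed.

Ltac solve_In := repeat progress (simpl in *; rewrite ?in_app_iff in *); tauto.

Lemma fresh_notin_incl l l' : (forall x, In x l' -> In x l) -> ~ In (fresh l) l'.
Proof. intros H Hc. apply H in Hc. apply fresh_notin in Hc. auto. Qed.

Lemma fresh_le_notin_incl l l' z : fresh l <= z -> (forall x, In x l' -> In x l) -> ~ In z l'.
Proof. intros Hz H Hc. apply H in Hc. apply fresh_gt in Hc. lia. Qed.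

Lemma subst_avoids_single y w l : ~ In w l -> subst_avoids [(y, w)] l.
Proof.
  intros H b Hb v Hv. rewrite assoc1. destruct (Nat.eqb y v); auto. intro; subst; auto.
Qed.

Lemma is_cps_app_rename_last acc y rest k C w : is_cps_app (acc ++ [y]) rest k C -> ~ In y (k :: acc ++ tvars_list rest) ->
  ~ In w (bv_decl C) -> is_cps_app (acc ++ [w]) rest k (subst_decl [(y, w)] C).
Proof.
  intros H Hy Hw. pose proof (is_cps_app_subst _ _ _ _ H [(y, w)] (subst_avoids_single _ _ _ Hw)) as H'.
  rewrite map_app in H'. cbn [map] in H'. rewrite (assoc1 y w y), Nat.eqb_refl in H'.
  rewrite map_assoc_id in H'.
  2:{ intros v Hv. rewrite assoc1. destruct (Nat.eqb y v) eqn:E; auto. apply Nat.eqb_eq in E. subst.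
      exfalso; apply Hy; simpl; right; apply in_or_app; auto. }
  rewrite map_subst_id in H'.
  2:{ intros v Hv. rewrite assoc1. destruct (Nat.eqb y v) eqn:E; auto. apply Nat.eqb_eq in E. subst.
      exfalso; apply Hy; simpl; right; apply in_or_app; auto. }
  rewrite (assoc1 y w k) in H'. destruct (Nat.eqb y k) eqn:E.
  - apply Nat.eqb_eq in E. subst. exfalso; apply Hy; simpl; auto.
  - exact H'.
Qed.

Lemma is_cps_app_rename_cont acc rest k C w : is_cps_app acc rest k C -> ~ In k (acc ++ tvars_list rest) ->
  ~ In w (bv_decl C) -> is_cps_app acc rest w (subst_decl [(k, w)] C).
Proof.
  intros H Hk Hw. pose proof (is_cps_app_subst _ _ _ _ H [(k, w)] (subst_avoids_single _ _ _ Hw)) as H'.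
  rewrite (assoc1 k w k), Nat.eqb_refl in H'.
  rewrite map_assoc_id in H'.
  2:{ intros v Hv. rewrite assoc1. destruct (Nat.eqb k v) eqn:E; auto. apply Nat.eqb_eq in E. subst.
      exfalso; apply Hk; apply in_or_app; auto. }
  rewrite map_subst_id in H'.
  2:{ intros v Hv. rewrite assoc1. destruct (Nat.eqb k v) eqn:E; auto. apply Nat.eqb_eq in E. subst.
      exfalso; apply Hk; apply in_or_app; auto. }
  exact H'.
Qed.

Lemma lsize_args_lt m m1 ms : lsize (m :: m1 :: ms) < size (App m m1 ms).
Proof. rewrite size_App. rewrite !lsize_cons. lia. Qed.

(** * Uniqueness of the translation up to congruence *)

Lemma is_cps_app_unique : forall n acc rest k C1 C2, lsize rest < n ->
  is_cps_app acc rest k C1 -> is_cps_app acc rest k C2 -> cong_decl C1 C2.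
Proof.
  induction n; intros acc rest k C1 C2 Hn H1 H2; [lia|].
  destruct H1 as [x xs k|acc v rest k C1 H1|acc m m1 ms rest k y1 k1 A1 B1 Hy1 Hk1 HA1 HB1].
  - inversion H2; subst. apply cd_refl.
  - inversion H2; subst. eapply IHn; eauto. rewrite lsize_cons in Hn. pose proof (size_pos (Var v)); lia.
  - inversion H2 as [| |acc' m' m1' ms' rest' k' y2 k2 A2 B2 Hy2 Hk2 HA2 HB2]; subst.
    rewrite lsize_cons in Hn. pose proof (lsize_args_lt m m1 ms) as Hin.
    pose proof (size_pos (App m m1 ms)).
    set (w := fresh (allvars_decl A1 ++ allvars_decl A2)).
    assert (Hw1 : ~ In w (allvars_decl A1)) by (apply fresh_notin_incl; intros; apply in_or_app; auto).
    assert (Hw2 : ~ In w (allvars_decl A2)) by (apply fresh_notin_incl; intros; apply in_or_app; auto).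
    assert (HL : cong_val (Lam y1 [] A1) (Lam y2 [] A2)).
    { eapply cv_trans.
      - apply (cv_alpha y1 [] w [] A1).
        + constructor; auto. constructor.
        + reflexivity.
        + intros u [Hu|[]]. subst. auto.
      - eapply cv_trans; [|apply cv_sym; apply (cv_alpha y2 [] w [] A2)].
        + apply cv_lam. simpl. unfold subst_of. simpl.
          eapply IHn; [|apply is_cps_app_rename_last; eauto| apply is_cps_app_rename_last; eauto]; try lia.
          * intro; apply Hw1; apply bv_allvars_decl; auto.
          * intro; apply Hw2; apply bv_allvars_decl; auto.
        + constructor; auto. constructor.
        + reflexivity.
        + intros u [Hu|[]]. subst. auto. }
    set (w' := fresh (allvars_decl B1 ++ allvars_decl B2 ++ tvars_list (m :: m1 :: ms))).
    assert (Hw1' : ~ In w' (allvars_decl B1)) by (apply fresh_notin_incl; intros; apply in_or_app; auto).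
    assert (Hw2' : ~ In w' (allvars_decl B2)) by (apply fresh_notin_incl; intros; apply in_or_app; right; apply in_or_app; auto).
    eapply cd_trans; [apply cd_let_v; exact HL|].
    eapply cd_trans; [apply (cd_alpha k1 w'); auto|].
    eapply cd_trans; [|apply cd_sym; apply (cd_alpha k2 w'); auto].
    apply cd_let_d. eapply IHn; [|apply is_cps_app_rename_cont; eauto| apply is_cps_app_rename_cont; eauto]; try lia.
    + intro; apply Hw1'; apply bv_allvars_decl; auto.
    + intro; apply Hw2'; apply bv_allvars_decl; auto.
Qed.

Lemma is_cps_term_unique m k C1 C2 : is_cps_term m k C1 -> is_cps_term m k C2 -> cong_decl C1 C2.
Proof.
  destruct 1; intros H2; inversion H2; subst.
  - apply cd_refl.
  - eapply is_cps_app_unique; eauto.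
Qed.

Fixpoint val_size (v : val) : nat :=
  match v with Star => 0 | Lam _ _ d => S (decl_size d) end
with decl_size (d : decl) : nat :=
  match d with Let _ v d => S (val_size v + decl_size d) | Ret _ => 0 end.

Lemma size_subst : (forall v s, val_size (subst_val s v) = val_size v) /\ (forall d s, decl_size (subst_decl s d) = decl_size d).
Proof.
  apply (vd_mutind (fun v => forall s, val_size (subst_val s v) = val_size v) (fun d => forall s, decl_size (subst_decl s d) = decl_size d));
    simpl; intros; auto.
Qed.

Lemma seq_split w n : seq w (S (S n)) = w :: seq (S w) n ++ [S w + n].
Proof. change (seq w (S (S n))) with (w :: seq (S w) (S n)). rewrite seq_S. reflexivity. Qed.

Lemma is_cps_unique : forall n,
  (forall v, val_size v < n -> forall V1 V2, is_cps_val v V1 -> is_cps_val v V2 -> cong_val V1 V2) /\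
  (forall d, decl_size d < n -> forall k C1 C2, is_cps_decl d k C1 -> is_cps_decl d k C2 -> cong_decl C1 C2).
Proof.
  induction n; [split; intros; lia|]. destruct IHn as [IHv IHd]. split.
  - intros v Hv V1 V2 H1 H2. destruct H1 as [|y ys d k1 C1 Hk1 Hk1' HC1].
    + inversion H2; subst. apply cv_refl.
    + inversion H2 as [|y' ys' d' k2 C2 Hk2 Hk2' HC2]; subst.
      simpl in Hv.
      (* Rename the parameters of both lambdas, continuation included, to the same fresh names. *)
      set (L := allvars_decl C1 ++ allvars_decl C2 ++ fv_decl d ++ y :: ys ++ [k1; k2]).
      set (w := fresh L).
      set (ws0 := seq (S w) (length ys)).
      set (wl := S w + length ys).
      assert (Hseq : w :: ws0 ++ [wl] = seq w (S (S (length ys)))) by (symmetry; apply seq_split).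
      assert (Hnd : NoDup (w :: ws0 ++ [wl])) by (rewrite Hseq; apply seq_NoDup).
      assert (Hge : forall u, In u (w :: ws0 ++ [wl]) -> w <= u).
      { intros u Hu. rewrite Hseq in Hu. apply in_seq in Hu. lia. }
      assert (Hnot : forall u, In u (w :: ws0 ++ [wl]) -> ~ In u L).
      { intros u Hu. apply Hge in Hu. apply fresh_le_notin_incl with (l := L); auto. }
      assert (Hlen : length ys = length ws0) by (unfold ws0; rewrite length_seq; auto).
      assert (Hinst : forall kk C, ~ In kk (fv_decl d) -> is_cps_decl d kk C ->
                (forall u, In u (w :: ws0 ++ [wl]) -> ~ In u (allvars_decl C)) ->
                is_cps_decl (subst_decl (subst_of (y :: ys) (w :: ws0)) d) wl
                     (subst_decl (subst_of (y :: ys ++ [kk]) (w :: ws0 ++ [wl])) C)).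
      { intros kk C Hkk HC Hu.
        apply (is_cps_decl_subst_params d kk C (y :: ys) (w :: ws0) wl); auto; [simpl; auto|].
        intros u Hu' Hb. apply (Hu u Hu'). apply bv_allvars_decl. exact Hb. }
      assert (HF1 : forall u, In u (w :: ws0 ++ [wl]) -> ~ In u (allvars_decl C1)).
      { intros u Hu Hc. apply (Hnot u Hu). unfold L. apply in_or_app; auto. }
      assert (HF2 : forall u, In u (w :: ws0 ++ [wl]) -> ~ In u (allvars_decl C2)).
      { intros u Hu Hc. apply (Hnot u Hu). unfold L. apply in_or_app; right; apply in_or_app; auto. }
      assert (Hl1 : length (ys ++ [k1]) = length (ws0 ++ [wl])) by (rewrite !length_app; simpl; lia).
      assert (Hl2 : length (ys ++ [k2]) = length (ws0 ++ [wl])) by (rewrite !length_app; simpl; lia).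
      eapply cv_trans; [apply (cv_alpha y (ys ++ [k1]) w (ws0 ++ [wl]) C1 Hnd Hl1 HF1)|].
      eapply cv_trans; [|apply cv_sym; apply (cv_alpha y (ys ++ [k2]) w (ws0 ++ [wl]) C2 Hnd Hl2 HF2)].
      apply cv_lam. eapply IHd; [| apply Hinst; eauto | apply Hinst; eauto].
      rewrite (proj2 size_subst). lia.
  - intros d Hd k C1 C2 H1 H2. destruct H1 as [m k C1 Hm|x v d k V1 C1 Hxk HV1 HC1].
    + inversion H2; subst. eapply is_cps_term_unique; eauto.
    + inversion H2 as [|x' v' d' k' V2 C2' Hxk' HV2 HC2]; subst. simpl in Hd.
      eapply cd_trans; [apply cd_let_v; eapply IHv; eauto; lia|].
      apply cd_let_d. eapply IHd; eauto. lia.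
Qed.

Lemma is_cps_decl_unique d k C1 C2 : is_cps_decl d k C1 -> is_cps_decl d k C2 -> cong_decl C1 C2.
Proof. intros. eapply (proj2 (is_cps_unique (S (decl_size d)))); eauto. Qed.
Lemma is_cps_val_unique v V1 V2 : is_cps_val v V1 -> is_cps_val v V2 -> cong_val V1 V2.
Proof. intros. eapply (proj1 (is_cps_unique (S (val_size v)))); eauto. Qed.

(* The translation with administrative names chosen outside [Sv] as well; [Sv = []] gives
   [cps_app], [cps_decl], ... *)
Fixpoint cps_app_avoid (Sv : list var) (n : nat) (acc : list var) (rest : list term) (k : var) : decl :=
  match n with
  | 0 => Ret (Var k)
  | S n' =>
      match rest with
      | [] => match acc with x :: xs => Ret (mkApp (Var x) (map Var (xs ++ [k]))) | [] => Ret (Var k) end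
      | Var v :: rest' => cps_app_avoid Sv n' (acc ++ [v]) rest' k
      | App m m1 ms :: rest' =>
          let y := fresh (Sv ++ k :: acc ++ tvars_list rest) in
          let k' := S y in
          Let k' (Lam y [] (cps_app_avoid Sv n' (acc ++ [y]) rest' k)) (cps_app_avoid Sv n' [] (m :: m1 :: ms) k')
      end
  end.

Definition cps_term_avoid Sv (t : term) (k : var) : decl :=
  match t with
  | Var x => Ret (App (Var k) (Var x) [])
  | App m m1 ms => cps_app_avoid Sv (size t) [] (m :: m1 :: ms) k
  end.

Fixpoint cps_val_avoid Sv (v : val) : val :=
  match v with
  | Star => Star
  | Lam y ys d => let k := fresh (Sv ++ y :: ys ++ allvars_decl d) in Lam y (ys ++ [k]) (cps_decl_avoid Sv d k)
  end
with cps_decl_avoid Sv (d : decl) (k : var) : decl :=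
  match d with
  | Let x v d => Let x (cps_val_avoid Sv v) (cps_decl_avoid Sv d k)
  | Ret m => cps_term_avoid Sv m k
  end.

Lemma cps_app_avoid_nil n acc rest k : cps_app n acc rest k = cps_app_avoid [] n acc rest k.
Proof.
  revert acc rest k. induction n; intros acc rest k; [reflexivity|].
  destruct rest as [|t rest]; [reflexivity|]. destruct t; simpl; rewrite ?IHn; reflexivity.
Qed.

Lemma cps_avoid_nil : (forall v, cps_val v = cps_val_avoid [] v) /\ (forall d k, cps_decl d k = cps_decl_avoid [] d k).
Proof.
  apply (vd_mutind (fun v => cps_val v = cps_val_avoid [] v) (fun d => forall k, cps_decl d k = cps_decl_avoid [] d k));
    intros.
  - reflexivity.
  - simpl. rewrite H. reflexivity.
  - simpl. rewrite H, H0. reflexivity.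
  - change (cps_term m k = cps_term_avoid [] m k). destruct m; [reflexivity|].
    unfold cps_term, cps_term_avoid. apply cps_app_avoid_nil.
Qed.

Lemma cps_app_avoid_spec Sv : forall n acc rest k, lsize rest < n -> (acc <> [] \/ rest <> []) ->
  is_cps_app acc rest k (cps_app_avoid Sv n acc rest k) /\ (forall b, In b (bv_decl (cps_app_avoid Sv n acc rest k)) -> ~ In b Sv).
Proof.
  induction n; intros acc rest k Hn Hne; [lia|].
  destruct rest as [|t rest].
  - destruct acc as [|x xs]; [destruct Hne; congruence|]. simpl. split; [constructor|]. intros b [].
  - rewrite lsize_cons in Hn. pose proof (size_pos t). destruct t as [v|m m1 ms].
    + cbn [cps_app_avoid]. destruct (IHn (acc ++ [v]) rest k) as [H1 H2]; [simpl in Hn; lia| left; destruct acc; simpl; congruence|].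
      split; [constructor; auto| auto].
    + cbn zeta. cbn [cps_app_avoid].
      set (y := fresh (Sv ++ k :: acc ++ tvars_list (App m m1 ms :: rest))).
      pose proof (lsize_args_lt m m1 ms).
      destruct (IHn (acc ++ [y]) rest k) as [H1 B1]; [lia| left; destruct acc; simpl; congruence|].
      destruct (IHn [] (m :: m1 :: ms) (S y)) as [H2 B2]; [lia| right; congruence|].
      assert (Hy : forall z, In z (Sv ++ k :: acc ++ tvars_list (App m m1 ms :: rest)) -> z < y)
        by (intros; apply fresh_gt; auto).
      split.
      * apply cpsa_app; auto.
        -- intros Hc. assert (y < y); [|lia]. apply Hy. apply in_or_app. right.
           simpl in Hc |- *. destruct Hc; auto. right. apply in_app_or in H3. apply in_or_app. destruct H3; auto.
           right. rewrite tvars_list_cons. apply in_or_app. auto.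
        -- intros Hc. assert (S y < y); [|lia]. apply Hy. apply in_or_app. right. right. apply in_or_app. right.
           rewrite tvars_list_cons. apply in_or_app. left. rewrite tvars_App. rewrite !tvars_list_cons in Hc. exact Hc.
      * simpl. intros b Hb Hbs. destruct Hb as [Hb|[Hb|Hb]].
        -- subst. assert (S y < y); [|lia]. apply Hy. apply in_or_app. auto.
        -- subst. assert (y < y); [|lia]. apply Hy. apply in_or_app. auto.
        -- apply in_app_or in Hb. destruct Hb; [eapply B1|eapply B2]; eauto.
Qed.

Lemma cps_term_avoid_spec Sv t k : is_cps_term t k (cps_term_avoid Sv t k) /\ (forall b, In b (bv_decl (cps_term_avoid Sv t k)) -> ~ In b Sv).
Proof.
  destruct t as [x|m m1 ms]; simpl.
  - split; [constructor|]. intros b [].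
  - destruct (cps_app_avoid_spec Sv (size (App m m1 ms)) [] (m :: m1 :: ms) k) as [H1 H2].
    + apply lsize_args_lt.
    + right; congruence.
    + split; auto. constructor. auto.
Qed.

Lemma cps_avoid_spec Sv :
  (forall v, is_cps_val v (cps_val_avoid Sv v) /\ (forall b, In b (bv_val (cps_val_avoid Sv v)) -> In b (bv_val v) \/ ~ In b Sv)) /\
  (forall d k, ~ In k (allvars_decl d) -> is_cps_decl d k (cps_decl_avoid Sv d k) /\
     (forall b, In b (bv_decl (cps_decl_avoid Sv d k)) -> In b (bv_decl d) \/ ~ In b Sv)).
Proof.
  apply (vd_mutind (fun v => is_cps_val v (cps_val_avoid Sv v) /\ (forall b, In b (bv_val (cps_val_avoid Sv v)) -> In b (bv_val v) \/ ~ In b Sv))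
     (fun d => forall k, ~ In k (allvars_decl d) -> is_cps_decl d k (cps_decl_avoid Sv d k) /\
     (forall b, In b (bv_decl (cps_decl_avoid Sv d k)) -> In b (bv_decl d) \/ ~ In b Sv))); intros.
  - simpl. split; [constructor|]. intros b [].
  - cbn [cps_val_avoid]. cbn zeta.
    set (k := fresh (Sv ++ y :: ys ++ allvars_decl d)).
    assert (Hk : forall z, In z (Sv ++ y :: ys ++ allvars_decl d) -> z <> k)
      by (intros z Hz E; subst; apply fresh_notin in Hz; auto).
    destruct (H k) as [H1 H2].
    { intro Hc. apply (Hk k); auto. apply in_or_app; right; right; apply in_or_app; auto. }
    split.
    + constructor; auto.
      * intro Hc. apply (Hk k); auto. apply in_or_app; right. simpl in Hc |- *. destruct Hc; auto.
        right; apply in_or_app; auto.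
      * intro Hc. apply (Hk k); auto. apply in_or_app; right; right; apply in_or_app; right; apply fv_allvars_decl; auto.
    + simpl. intros b Hb. destruct Hb as [Hb|Hb]; [left; auto|].
      apply in_app_or in Hb. destruct Hb as [Hb|Hb].
      * apply in_app_or in Hb. destruct Hb as [Hb|[Hb|[]]]; [left; right; apply in_or_app; auto|].
        right. intro Hc. subst b. apply (Hk k); auto. apply in_or_app; auto.
      * destruct (H2 b Hb); auto. left; right; apply in_or_app; auto.
  - simpl. destruct H as [H1' H2]. destruct (H0 k) as [H3 H4].
    { intro Hc. apply H1. apply allvars_let_body. auto. }
    split.
    + constructor; auto. intro E. subst. apply H1. apply allvars_let_var.
    + intros b [Hb|Hb]; [left; simpl; auto|]. apply in_app_or in Hb. destruct Hb as [Hb|Hb].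
      * destruct (H2 b Hb); auto. left; simpl; right; apply in_or_app; auto.
      * destruct (H4 b Hb); auto. left; simpl; right; apply in_or_app; auto.
  - simpl. destruct (cps_term_avoid_spec Sv m k) as [H1 H2]. split; [constructor; auto|]. intros b Hb. right. auto.
Qed.

Lemma cps_decl_spec d k : ~ In k (allvars_decl d) -> is_cps_decl d k (cps_decl d k).
Proof. intros H. rewrite (proj2 cps_avoid_nil). apply (proj2 (cps_avoid_spec [])). auto. Qed.

Lemma is_cps_decl_exists Sv d k : ~ In k (allvars_decl d) -> exists C, is_cps_decl d k C /\
   (forall b, In b (bv_decl C) -> In b (bv_decl d) \/ ~ In b Sv).
Proof. intros H. exists (cps_decl_avoid Sv d k). apply (proj2 (cps_avoid_spec Sv)). auto. Qed.

Lemma is_cps_val_exists Sv v : exists V, is_cps_val v V /\ (forall b, In b (bv_val V) -> In b (bv_val v) \/ ~ In b Sv).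
Proof. exists (cps_val_avoid Sv v). apply (proj1 (cps_avoid_spec Sv)). Qed.

Lemma is_cps_app_exists Sv acc rest k : (acc <> [] \/ rest <> []) -> exists C, is_cps_app acc rest k C /\
   (forall b, In b (bv_decl C) -> ~ In b Sv).
Proof. intros H. exists (cps_app_avoid Sv (S (lsize rest)) acc rest k). apply cps_app_avoid_spec; auto. Qed.

(** * Injective renamings *)

Fixpoint ren_term (f : var -> var) (t : term) : term :=
  match t with
  | Var x => Var (f x)
  | App m m1 ms => App (ren_term f m) (ren_term f m1) (map (ren_term f) ms)
  end.

Fixpoint ren_val (f : var -> var) (v : val) : val :=
  match v with
  | Star => Star
  | Lam y ys d => Lam (f y) (map f ys) (ren_decl f d)
  end
with ren_decl (f : var -> var) (d : decl) : decl :=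
  match d with
  | Let x v d => Let (f x) (ren_val f v) (ren_decl f d)
  | Ret m => Ret (ren_term f m)
  end.

Definition ren_pair (f : var -> var) (p : var * var) := (f (fst p), f (snd p)).
Definition ren_binding (f : var -> var) (p : var * val) := (f (fst p), ren_val f (snd p)).

Definition lets_in (L : list (var * val)) (C : decl) : decl := fold_right (fun p d => Let (fst p) (snd p) d) C L.

Lemma lets_in_app a b C : lets_in (a ++ b) C = lets_in a (lets_in b C).
Proof. unfold lets_in. apply fold_right_app. Qed.

Lemma split_lets_in ls d : split_decl (lets_in ls d) = (ls ++ fst (split_decl d), snd (split_decl d)).
Proof.
  induction ls as [|[x v] ls IH]; simpl.
  - destruct (split_decl d); reflexivity.
  - rewrite IH. reflexivity.
Qed.

Lemma lets_in_split d : d = lets_in (fst (split_decl d)) (Ret (snd (split_decl d))).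
Proof.
  induction d as [x v d IH|m]; simpl; auto.
  destruct (split_decl d) as [ls m] eqn:E. simpl in *. f_equal. auto.
Qed.

Lemma plugD_lets_in E d : plugD E d = lets_in (ec_lets E ++ fst (split_decl d)) (Ret (plug_frames (ec_frames E) (snd (split_decl d)))).
Proof. unfold plugD. destruct (split_decl d); reflexivity. Qed.

Lemma plugD_no_frames E d : ec_frames E = [] -> plugD E d = lets_in (ec_lets E) d.
Proof.
  intros H. rewrite plugD_lets_in, H. simpl. rewrite lets_in_app. f_equal. symmetry. apply lets_in_split.
Qed.

Lemma plug_ok_no_frames E d : ec_frames E = [] -> plug_ok E d.
Proof. intros H. unfold plug_ok. rewrite H. simpl. auto. Qed.

Scheme cong_val_ind2 := Induction for cong_val Sort Prop with cong_decl_ind2 := Induction for cong_decl Sort Prop.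
Combined Scheme cong_mutind from cong_val_ind2, cong_decl_ind2.

Section Renaming.
Variable f : var -> var.
Hypothesis Hf : forall a b, f a = f b -> a = b.

Lemma In_map_inj x l : In (f x) (map f l) <-> In x l.
Proof.
  split; intros H.
  - apply in_map_iff in H. destruct H as [y [E H]]. apply Hf in E. subst. auto.
  - apply in_map. auto.
Qed.

Lemma eqb_inj a b : Nat.eqb (f a) (f b) = Nat.eqb a b.
Proof.
  destruct (Nat.eqb a b) eqn:E.
  - apply Nat.eqb_eq in E. subst. apply Nat.eqb_refl.
  - apply Nat.eqb_neq. intro E'. apply Hf in E'. apply Nat.eqb_neq in E. auto.
Qed.

Lemma existsb_inj a ks : existsb (Nat.eqb (f a)) (map f ks) = existsb (Nat.eqb a) ks.
Proof. induction ks; simpl; auto. rewrite eqb_inj, IHks. auto. Qed.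

Lemma remove_all_map ks l : remove_all (map f ks) (map f l) = map f (remove_all ks l).
Proof.
  unfold remove_all. induction l; simpl; auto. rewrite existsb_inj.
  destruct (existsb (Nat.eqb a) ks); simpl; f_equal; auto.
Qed.

Lemma tvars_ren t : tvars (ren_term f t) = map f (tvars t).
Proof.
  induction t using term_ind_nested.
  - reflexivity.
  - change (ren_term f (App t1 t2 ms)) with (App (ren_term f t1) (ren_term f t2) (map (ren_term f) ms)).
    rewrite !tvars_App, !map_app, IHt1, IHt2. f_equal. f_equal.
    induction H; auto. cbn [map]. rewrite !tvars_list_cons, map_app, H, IHForall. auto.
Qed.

Lemma tvars_list_ren l : tvars_list (map (ren_term f) l) = map f (tvars_list l).
Proof. induction l; auto. cbn [map]. rewrite !tvars_list_cons, map_app, tvars_ren, IHl. auto. Qed.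

Lemma vars_ren :
  (forall v, fv_val (ren_val f v) = map f (fv_val v) /\ bv_val (ren_val f v) = map f (bv_val v)) /\
  (forall d, fv_decl (ren_decl f d) = map f (fv_decl d) /\ bv_decl (ren_decl f d) = map f (bv_decl d)).
Proof.
  apply vd_mutind; simpl; intros; auto.
  - destruct H as [H1 H2]. rewrite H1, H2, <- remove_all_map. simpl. rewrite !map_app. auto.
  - destruct H as [H1 H2], H0 as [H3 H4]. rewrite H1, H2, H3, H4, !map_app, <- remove_all_map. auto.
  - rewrite tvars_ren. auto.
Qed.

Lemma fv_ren d : fv_decl (ren_decl f d) = map f (fv_decl d).
Proof. apply vars_ren. Qed.
Lemma bv_ren d : bv_decl (ren_decl f d) = map f (bv_decl d).
Proof. apply vars_ren. Qed.
Lemma fvv_ren v : fv_val (ren_val f v) = map f (fv_val v).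
Proof. apply vars_ren. Qed.
Lemma allvars_ren d : allvars_decl (ren_decl f d) = map f (allvars_decl d).
Proof. unfold allvars_decl. rewrite fv_ren, bv_ren, map_app. auto. Qed.

Lemma assoc_ren s v : assoc (map (ren_pair f) s) (f v) = f (assoc s v).
Proof. induction s as [|[a b] s IH]; simpl; auto. rewrite eqb_inj. destruct (Nat.eqb a v); auto. Qed.

Lemma drop_ren ks s : drop_keys (map f ks) (map (ren_pair f) s) = map (ren_pair f) (drop_keys ks s).
Proof.
  unfold drop_keys. induction s as [|[a b] s IH]; simpl; auto. rewrite existsb_inj.
  destruct (existsb (Nat.eqb a) ks); simpl; f_equal; auto.
Qed.

Lemma subst_term_ren s t : ren_term f (subst_term s t) = subst_term (map (ren_pair f) s) (ren_term f t).
Proof.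
  induction t using term_ind_nested.
  - simpl. rewrite assoc_ren. auto.
  - rewrite subst_App. change (ren_term f (App t1 t2 ms)) with (App (ren_term f t1) (ren_term f t2) (map (ren_term f) ms)).
    rewrite subst_App. cbn [ren_term]. f_equal; auto. rewrite !map_map. apply map_ext_in.
    intros a Ha. rewrite Forall_forall in H. auto.
Qed.

Lemma subst_ren :
  (forall v s, ren_val f (subst_val s v) = subst_val (map (ren_pair f) s) (ren_val f v)) /\
  (forall d s, ren_decl f (subst_decl s d) = subst_decl (map (ren_pair f) s) (ren_decl f d)).
Proof.
  apply (vd_mutind (fun v => forall s, ren_val f (subst_val s v) = subst_val (map (ren_pair f) s) (ren_val f v))
     (fun d => forall s, ren_decl f (subst_decl s d) = subst_decl (map (ren_pair f) s) (ren_decl f d))); intros; simpl; auto.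
  - rewrite H. f_equal. f_equal. change (f y :: map f ys) with (map f (y :: ys)). rewrite drop_ren. auto.
  - rewrite H, H0. f_equal. f_equal. change [f x] with (map f [x]). rewrite drop_ren. auto.
  - f_equal. apply subst_term_ren.
Qed.

Lemma subst_of_ren ys zs : map (ren_pair f) (subst_of ys zs) = subst_of (map f ys) (map f zs).
Proof.
  unfold subst_of. rewrite map_rev. f_equal. revert zs. induction ys; destruct zs; simpl; auto. f_equal. auto.
Qed.

Lemma ren_lets_in ls d : ren_decl f (lets_in ls d) = lets_in (map (ren_binding f) ls) (ren_decl f d).
Proof. induction ls; simpl; auto. rewrite IHls. auto. Qed.

Lemma NoDup_ren l : NoDup l -> NoDup (map f l).
Proof.
  induction 1; simpl; constructor; auto. rewrite In_map_inj. auto.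
Qed.

Lemma cong_ren :
  (forall v w, cong_val v w -> cong_val (ren_val f v) (ren_val f w)) /\
  (forall d e, cong_decl d e -> cong_decl (ren_decl f d) (ren_decl f e)).
Proof.
  apply cong_mutind; intros; simpl.
  - apply cv_refl.
  - apply cv_sym; auto.
  - eapply cv_trans; eauto.
  - apply cv_lam; auto.
  - rewrite (proj2 subst_ren), subst_of_ren. simpl.
    apply (cv_alpha (f y) (map f ys) (f y') (map f ys')).
    + apply (NoDup_ren (y' :: ys')). auto.
    + rewrite !length_map. auto.
    + intros w Hw. change (f y' :: map f ys') with (map f (y' :: ys')) in Hw.
      apply in_map_iff in Hw. destruct Hw as [u [E Hu]]. subst w. rewrite allvars_ren, In_map_inj. auto.
  - apply cd_refl.
  - apply cd_sym; auto.
  - eapply cd_trans; eauto.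
  - apply cd_let_v; auto.
  - apply cd_let_d; auto.
  - rewrite (proj2 subst_ren). simpl. apply cd_alpha. rewrite allvars_ren, In_map_inj. auto.
  - apply cd_swap.
    + intro E. apply Hf in E. auto.
    + rewrite fvv_ren, In_map_inj. auto.
    + rewrite fvv_ren, In_map_inj. auto.
  - apply cd_gc. rewrite fv_ren, In_map_inj. auto.
Qed.

Lemma ak_ren : (forall v, ak_val v -> ak_val (ren_val f v)) /\ (forall d, ak_decl d -> ak_decl (ren_decl f d)).
Proof.
  apply (vd_mutind (fun v => ak_val v -> ak_val (ren_val f v)) (fun d => ak_decl d -> ak_decl (ren_decl f d))); simpl; intros; auto.
  - destruct H1; auto.
  - destruct H as [x [y [ys E]]]. subst. simpl. exists (f x), (f y), (map f ys). rewrite !map_map. auto.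
Qed.

Lemma ren_mkApp_vars x l : ren_term f (mkApp (Var x) (map Var l)) = mkApp (Var (f x)) (map Var (map f l)).
Proof. destruct l; simpl; auto. rewrite !map_map. auto. Qed.

Lemma is_cps_app_ren acc rest k C : is_cps_app acc rest k C -> is_cps_app (map f acc) (map (ren_term f) rest) (f k) (ren_decl f C).
Proof.
  induction 1.
  - simpl. rewrite ren_mkApp_vars, map_app. simpl. constructor.
  - simpl. constructor. rewrite map_app in IHis_cps_app. exact IHis_cps_app.
  - simpl. rewrite map_app in IHis_cps_app1. simpl in IHis_cps_app1. apply cpsa_app; auto.
    + change (f k :: map f acc ++ tvars_list (map (ren_term f) rest)) with (map f (k :: acc) ++ tvars_list (map (ren_term f) rest)).
      rewrite tvars_list_ren, <- map_app. rewrite In_map_inj. auto.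
    + change (ren_term f m :: ren_term f m1 :: map (ren_term f) ms) with (map (ren_term f) (m :: m1 :: ms)).
      rewrite tvars_list_ren, In_map_inj. auto.
Qed.

Lemma is_cps_term_ren m k C : is_cps_term m k C -> is_cps_term (ren_term f m) (f k) (ren_decl f C).
Proof.
  destruct 1; simpl.
  - constructor.
  - constructor. apply (is_cps_app_ren _ _ _ _ H).
Qed.

Lemma is_cps_ren : (forall v V, is_cps_val v V -> is_cps_val (ren_val f v) (ren_val f V)) /\ (forall d k C, is_cps_decl d k C -> is_cps_decl (ren_decl f d) (f k) (ren_decl f C)).
Proof.
  apply (is_cps_mutind (fun v V _ => is_cps_val (ren_val f v) (ren_val f V)) (fun d k C _ => is_cps_decl (ren_decl f d) (f k) (ren_decl f C)));
    intros; simpl.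
  - constructor.
  - rewrite map_app. simpl. constructor; auto.
    + change (f y :: map f ys) with (map f (y :: ys)). rewrite In_map_inj. auto.
    + rewrite fv_ren, In_map_inj. auto.
  - constructor. apply is_cps_term_ren. auto.
  - constructor; auto; intro E; apply Hf in E; auto.
Qed.

Lemma red_ak_ren D1 D2 : red_ak D1 D2 -> red_ak (ren_decl f D1) (ren_decl f D2).
Proof.
  intros [HA1 [HA2 [X1 [X2 [HX1 [HX2 [Hc1 [Hb Hc2]]]]]]]].
  split; [apply ak_ren; auto|]. split; [apply ak_ren; auto|].
  exists (ren_decl f X1), (ren_decl f X2).
  split; [apply ak_ren; auto|]. split; [apply ak_ren; auto|].
  split; [apply cong_ren; auto|]. split; [|apply cong_ren; auto].
  destruct Hb as [E E' x y ys D z zs HE HE' Hlen Hz Hx Hlets _ _ _].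
  set (Er := {| ec_lets := map (ren_binding f) (ec_lets E); ec_frames := [] |}).
  set (Er' := {| ec_lets := map (ren_binding f) (ec_lets E'); ec_frames := [] |}).
  assert (Eq1 : ren_decl f (plugD E (Let x (Lam y ys D) (plugD E' (Ret (App (Var x) (Var z) (map Var zs)))))) =
    plugD Er (Let (f x) (Lam (f y) (map f ys) (ren_decl f D)) (plugD Er' (Ret (App (Var (f x)) (Var (f z)) (map Var (map f zs))))))).
  { rewrite !plugD_no_frames; auto. rewrite ren_lets_in. simpl. rewrite ren_lets_in. simpl. rewrite !map_map. auto. }
  assert (Eq2 : ren_decl f (plugD E (Let x (Lam y ys D) (plugD E' (subst_decl (subst_of (y :: ys) (z :: zs)) D)))) =
    plugD Er (Let (f x) (Lam (f y) (map f ys) (ren_decl f D)) (plugD Er' (subst_decl (subst_of (f y :: map f ys) (f z :: map f zs)) (ren_decl f D))))).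
  { rewrite !plugD_no_frames; auto. rewrite ren_lets_in. simpl. rewrite ren_lets_in. rewrite (proj2 subst_ren), subst_of_ren. auto. }
  rewrite Eq1, Eq2. apply base_beta; auto.
  - rewrite !length_map. auto.
  - intros w Hw. change (f z :: map f zs) with (map f (z :: zs)) in Hw. apply in_map_iff in Hw.
    destruct Hw as [u [Eu Hu]]. subst w. rewrite bv_ren, In_map_inj. auto.
  - simpl. rewrite map_map. simpl. rewrite <- map_map. rewrite In_map_inj. auto.
  - intros w Hw. change (Lam (f y) (map f ys) (ren_decl f D)) with (ren_val f (Lam y ys D)). rewrite fvv_ren.
    simpl in Hw. rewrite map_map in Hw. simpl in Hw. rewrite <- map_map in Hw. apply in_map_iff in Hw.
    destruct Hw as [u [Eu Hu]]. subst w. rewrite In_map_inj. apply Hlets. auto.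
  - apply plug_ok_no_frames; auto.
  - apply plug_ok_no_frames; auto.
  - apply plug_ok_no_frames; auto.
Qed.

Lemma clos_trans_red_ak_ren D1 D2 : clos_trans decl red_ak D1 D2 -> clos_trans decl red_ak (ren_decl f D1) (ren_decl f D2).
Proof.
  induction 1.
  - apply t_step. apply red_ak_ren; auto.
  - eapply t_trans; eauto.
Qed.
End Renaming.

Lemma ren_id f :
  (forall v, (forall x, In x (allvars_val v) -> f x = x) -> ren_val f v = v) /\ (forall d, (forall x, In x (allvars_decl d) -> f x = x) -> ren_decl f d = d).
Proof.
  apply vd_mutind; intros; simpl; auto.
  - rewrite H0 by (apply allvars_lam_params; simpl; auto). rewrite map_ext_in with (g := fun x => x).
    + rewrite map_id. rewrite H; auto. intros; apply H0. apply allvars_lam_body; auto.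
    + intros a Ha. apply H0. apply allvars_lam_params. simpl; auto.
  - rewrite (H1 x (allvars_let_var x v d)).
    rewrite H by (intros; apply H1; apply allvars_let_val; auto).
    rewrite H0 by (intros; apply H1; apply allvars_let_body; auto). auto.
  - f_equal. assert (Ht : forall x, In x (tvars m) -> f x = x).
    { intros x Hx; apply H; unfold allvars_decl; simpl; apply in_or_app; auto. }
    clear H. induction m using term_ind_nested; simpl.
    + rewrite Ht; auto. rewrite tvars_Var. simpl; auto.
    + rewrite tvars_App in Ht. rewrite IHm1, IHm2.
      * f_equal. rewrite map_ext_in with (g := fun x => x); [apply map_id|].
        intros a Ha. rewrite Forall_forall in H. apply H; auto. intros x Hx. apply Ht.
        apply in_or_app; right; apply in_or_app; right. unfold tvars_list. apply in_flat_map. eauto.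
      * intros; apply Ht; apply in_or_app; right; apply in_or_app; auto.
      * intros; apply Ht; apply in_or_app; auto.
Qed.

Definition swap (a b : var) (v : var) : var := if Nat.eqb v a then b else if Nat.eqb v b then a else v.

Lemma swap_inj a b : forall x y, swap a b x = swap a b y -> x = y.
Proof.
  intros x y. unfold swap.
  destruct (Nat.eqb x a) eqn:E1, (Nat.eqb y a) eqn:E2, (Nat.eqb x b) eqn:E3, (Nat.eqb y b) eqn:E4;
    rewrite ?Nat.eqb_eq, ?Nat.eqb_neq in *; intros; subst; auto; try congruence; try lia.
Qed.

Lemma swap_id a b x : x <> a -> x <> b -> swap a b x = x.
Proof. intros. unfold swap. rewrite <- Nat.eqb_neq in H, H0. rewrite H, H0. auto. Qed.

(** * Compatibility with structural congruence *)

Lemma swap_l a b : swap a b a = b.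
Proof. unfold swap. rewrite Nat.eqb_refl. auto. Qed.

Lemma is_cps_decl_swap_cont d k k' C : is_cps_decl d k C ->
  ~ In k (allvars_decl d) -> ~ In k' (allvars_decl d) ->
  is_cps_decl d k' (ren_decl (swap k k') C).
Proof.
  intros HC Hk Hk'. pose proof (proj2 (is_cps_ren _ (swap_inj k k')) _ _ _ HC) as H.
  rewrite swap_l, (proj2 (ren_id (swap k k'))) in H; [exact H|].
  intros x Hx. apply swap_id; intro; subst; contradiction.
Qed.

Lemma NoDup_snoc (l : list var) a : NoDup l -> ~ In a l -> NoDup (l ++ [a]).
Proof.
  induction 1; simpl; intros.
  - constructor; auto. constructor.
  - constructor.
    + intro Hc. apply in_app_or in Hc. destruct Hc as [Hc|[Hc|[]]]; [contradiction|subst; apply H1; simpl; auto].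
    + apply IHNoDup. intro; apply H1; simpl; auto.
Qed.

Lemma is_cps_decl_fv_allvars d k C : is_cps_decl d k C -> forall w, In w (fv_decl C) -> w = k \/ In w (allvars_decl d).
Proof. intros H w Hw. destruct (proj2 is_cps_fv _ _ _ H w Hw); auto. right. apply fv_allvars_decl. auto. Qed.

Lemma is_cps_val_alpha y ys y' ys' d V W :
  NoDup (y' :: ys') -> length ys = length ys' ->
  (forall w, In w (y' :: ys') -> ~ In w (allvars_decl d)) ->
  is_cps_val (Lam y ys d) V ->
  is_cps_val (Lam y' ys' (subst_decl (subst_of (y :: ys) (y' :: ys')) d)) W ->
  cong_val V W.
Proof.
  intros Hnd Hlen Hfr HV HW.
  set (ks := fresh (y :: ys ++ y' :: ys' ++ allvars_decl d)).
  assert (Kd : ~ In ks (allvars_decl d)) by (apply fresh_notin_incl; intros; solve_In).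
  assert (Ky : ~ In ks (y :: ys)) by (apply fresh_notin_incl; intros; solve_In).
  assert (Ky' : ~ In ks (y' :: ys')) by (apply fresh_notin_incl; intros; solve_In).
  destruct (is_cps_decl_exists (y' :: ys') d ks Kd) as [Cs [HCs HBs]].
  set (kk := fresh (allvars_decl Cs ++ y' :: ys' ++ allvars_decl d)).
  assert (KkC : ~ In kk (allvars_decl Cs)) by (apply fresh_notin_incl; intros; solve_In).
  assert (Kky : ~ In kk (y' :: ys')) by (apply fresh_notin_incl; intros; solve_In).
  assert (Kkd : ~ In kk (allvars_decl d)) by (apply fresh_notin_incl; intros; solve_In).
  assert (Hnew : forall u, In u ((y' :: ys') ++ [kk]) -> ~ In u (allvars_decl Cs)).
  { intros u Hu. apply in_app_or in Hu. destruct Hu as [Hu|[Hu|[]]]; [|subst; auto].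
    intros Hc. unfold allvars_decl in Hc. apply in_app_or in Hc. destruct Hc as [Hc|Hc].
    - destruct (is_cps_decl_fv_allvars _ _ _ HCs _ Hc) as [E|E]; [subst; auto|].
      exact (Hfr u Hu E).
    - destruct (HBs _ Hc) as [E|E]; [|exact (E Hu)].
      apply (Hfr u Hu). apply bv_allvars_decl. exact E. }
  eapply cv_trans.
  { apply (is_cps_val_unique (Lam y ys d)); [exact HV|].
    apply cpsv_lam; [exact Ky| |exact HCs]. intro; apply Kd; apply fv_allvars_decl; auto. }
  eapply cv_trans.
  { apply (cv_alpha y (ys ++ [ks]) y' (ys' ++ [kk]) Cs); [|rewrite !length_app; simpl; lia|exact Hnew].
    apply (NoDup_snoc (y' :: ys')); auto. }
  apply (is_cps_val_unique (Lam y' ys' (subst_decl (subst_of (y :: ys) (y' :: ys')) d))); [|exact HW].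
  constructor; auto.
  - intros Hc. apply fv_subst in Hc. destruct Hc as [x [Hx Ex]].
    destruct (assoc_subst_of_range (y :: ys) (y' :: ys') x) as [E|E]; [simpl; auto| |].
    + rewrite E in Ex. subst. apply Kkd. apply fv_allvars_decl. auto.
    + rewrite <- Ex in E. auto.
  - apply (is_cps_decl_subst_params d ks Cs (y :: ys) (y' :: ys') kk); auto; [| simpl; auto|].
    + intro; apply Kd; apply fv_allvars_decl; auto.
    + intros u Hu Hb. apply (Hnew u Hu). apply bv_allvars_decl. exact Hb.
Qed.

Lemma is_cps_decl_alpha x x' v d k C1 C2 : ~ In x' (allvars_decl d) ->
  ~ In k (allvars_decl (Let x v d)) -> ~ In k (allvars_decl (Let x' v (subst_decl [(x, x')] d))) ->
  is_cps_decl (Let x v d) k C1 -> is_cps_decl (Let x' v (subst_decl [(x, x')] d)) k C2 ->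
  cong_decl C1 C2.
Proof.
  intros Hx' Hk Hk' H1 H2.
  inversion H1 as [|x1 v1 d1 k1 V1 C1' Hx1 HV1 HC1]; subst.
  inversion H2 as [|x2 v2 d2 k2 V2 C2' Hx2 HV2 HC2]; subst.
  assert (Kd : ~ In k (allvars_decl d)) by (intro; apply Hk; apply allvars_let_body; auto).
  destruct (is_cps_decl_exists [x'] d k Kd) as [Cs [HCs HBs]].
  assert (Hx'C : ~ In x' (allvars_decl Cs)).
  { intros Hc. unfold allvars_decl in Hc. apply in_app_or in Hc. destruct Hc as [Hc|Hc].
    - destruct (is_cps_decl_fv_allvars _ _ _ HCs _ Hc) as [E|E]; auto.
    - destruct (HBs _ Hc) as [E|E]; [apply Hx'; apply bv_allvars_decl; auto| apply E; simpl; auto]. }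
  eapply cd_trans; [apply cd_let_d; eapply is_cps_decl_unique; eauto|].
  eapply cd_trans; [apply (cd_alpha x x' V1 Cs Hx'C)|].
  eapply cd_trans; [apply cd_let_v; eapply is_cps_val_unique; eauto|].
  apply cd_let_d. eapply is_cps_decl_unique; [|exact HC2].
  pose proof (proj2 is_cps_subst _ _ _ HCs [(x, x')]) as H'.
  rewrite assoc1 in H'. destruct (Nat.eqb x k) eqn:E; [apply Nat.eqb_eq in E; subst; contradiction|].
  apply H'. apply subst_avoids_single. intro; apply Hx'C; apply bv_allvars_decl; auto.
Qed.

Lemma is_cps_decl_swap x1 v1 x2 v2 d k C1 C2 :
  x1 <> x2 -> ~ In x1 (fv_val v2) -> ~ In x2 (fv_val v1) ->
  is_cps_decl (Let x1 v1 (Let x2 v2 d)) k C1 -> is_cps_decl (Let x2 v2 (Let x1 v1 d)) k C2 ->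
  cong_decl C1 C2.
Proof.
  intros Hne H12 H21 H1 H2.
  inversion H1 as [|x1' v1' d1 k1 V1 C1' Hx1 HV1 HC1]; subst.
  inversion HC1 as [|x2' v2' d2 k2 V2 C2' Hx2 HV2 HC2]; subst.
  inversion H2 as [|x3 v3 d3 k3 V3 C3 Hx3 HV3 HC3]; subst.
  inversion HC3 as [|x4 v4 d4 k4 V4 C4 Hx4 HV4 HC4]; subst.
  eapply cd_trans; [apply cd_swap; auto|].
  - intro Hc; apply H12; exact (proj1 is_cps_fv _ _ HV2 _ Hc).
  - intro Hc; apply H21; exact (proj1 is_cps_fv _ _ HV1 _ Hc).
  - eapply cd_trans; [apply cd_let_v; eapply is_cps_val_unique; eauto|]. apply cd_let_d.
    eapply cd_trans; [apply cd_let_v; eapply is_cps_val_unique; eauto|]. apply cd_let_d.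
    eapply is_cps_decl_unique; eauto.
Qed.

Lemma is_cps_cong :
  (forall v w, cong_val v w -> forall V W, is_cps_val v V -> is_cps_val w W -> cong_val V W) /\
  (forall d e, cong_decl d e -> forall k, ~ In k (allvars_decl d) -> ~ In k (allvars_decl e) ->
     forall C1 C2, is_cps_decl d k C1 -> is_cps_decl e k C2 -> cong_decl C1 C2).
Proof.
  apply (cong_mutind (fun v w _ => forall V W, is_cps_val v V -> is_cps_val w W -> cong_val V W)
    (fun d e _ => forall k, ~ In k (allvars_decl d) -> ~ In k (allvars_decl e) ->
     forall C1 C2, is_cps_decl d k C1 -> is_cps_decl e k C2 -> cong_decl C1 C2)); intros.
  - eapply is_cps_val_unique; eauto.
  - apply cv_sym. auto.
  - destruct (is_cps_val_exists [] v) as [V' [HV' _]]. eapply cv_trans; [apply H|apply H0]; eauto.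
  - inversion H0 as [|y1 ys1 d1 k1 C1 Hk1 Hk1' HC1]; subst.
    inversion H1 as [|y2 ys2 d2 k2 C2 Hk2 Hk2' HC2]; subst.
    set (ks := fresh (y :: ys ++ allvars_decl d ++ allvars_decl d')).
    assert (Kd : ~ In ks (allvars_decl d)) by (apply fresh_notin_incl; intros; solve_In).
    assert (Kd' : ~ In ks (allvars_decl d')) by (apply fresh_notin_incl; intros; solve_In).
    assert (Ky : ~ In ks (y :: ys)) by (apply fresh_notin_incl; intros; solve_In).
    destruct (is_cps_decl_exists [] d ks Kd) as [Cd [HCd _]].
    destruct (is_cps_decl_exists [] d' ks Kd') as [Cd' [HCd' _]].
    eapply cv_trans; [apply (is_cps_val_unique (Lam y ys d)); [constructor; eauto|apply (cpsv_lam y ys d ks Cd); auto]|].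
    + intro; apply Kd; apply fv_allvars_decl; auto.
    + eapply cv_trans; [apply cv_lam; eapply H; eauto|].
      apply (is_cps_val_unique (Lam y ys d')); [apply (cpsv_lam y ys d' ks Cd'); auto|constructor; auto].
      intro; apply Kd'; apply fv_allvars_decl; auto.
  - eapply is_cps_val_alpha; eauto.
  - eapply is_cps_decl_unique; eauto.
  - apply cd_sym. eapply H; eauto.
  - rename d into d0, e into e0, f into f0.
    set (ks := fresh (k :: allvars_decl d0 ++ allvars_decl e0 ++ allvars_decl f0)).
    assert (K0 : ~ In ks [k]) by (apply fresh_notin_incl; intros; solve_In).
    assert (K1 : ~ In ks (allvars_decl d0)) by (apply fresh_notin_incl; intros; solve_In).
    assert (K2 : ~ In ks (allvars_decl e0)) by (apply fresh_notin_incl; intros; solve_In).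
    assert (K3 : ~ In ks (allvars_decl f0)) by (apply fresh_notin_incl; intros; solve_In).
    destruct (is_cps_decl_exists [] d0 ks K1) as [Cd [HCd _]].
    destruct (is_cps_decl_exists [] e0 ks K2) as [Ce [HCe _]].
    destruct (is_cps_decl_exists [] f0 ks K3) as [Cf [HCf _]].
    eapply cd_trans; [eapply is_cps_decl_unique; [exact H3|apply (is_cps_decl_swap_cont d0 ks k Cd); auto]|].
    eapply cd_trans.
    { apply (proj2 (cong_ren _ (swap_inj ks k))). eapply cd_trans; [eapply H|eapply H0]; eauto. }
    eapply is_cps_decl_unique; [apply (is_cps_decl_swap_cont f0 ks k Cf); auto|exact H4].
  - inversion H2 as [|x1 v1 d1 k1 V1 C1' Hx1 HV1 HC1]; subst.
    inversion H3 as [|x2 v2 d2 k2 V2 C2' Hx2 HV2 HC2]; subst.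
    eapply cd_trans; [apply cd_let_v; eapply H; eauto|]. apply cd_let_d. eapply is_cps_decl_unique; eauto.
  - inversion H2 as [|x1 v1 d1 k1 V1 C1' Hx1 HV1 HC1]; subst.
    inversion H3 as [|x2 v2 d2 k2 V2 C2' Hx2 HV2 HC2]; subst.
    eapply cd_trans; [apply cd_let_v; eapply is_cps_val_unique; eauto|]. apply cd_let_d. eapply H; eauto.
    + intro; apply H0; apply allvars_let_body; auto.
    + intro; apply H1; apply allvars_let_body; auto.
  - eapply (is_cps_decl_alpha x x' v d k); eassumption.
  - eapply (is_cps_decl_swap x1 v1 x2 v2 d k); eassumption.
  - rename n into Hx.
    inversion H1 as [|x1 v1 d1 k1 V1 C1' Hx1 HV1 HC1]; subst.
    eapply cd_trans; [apply cd_gc|].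
    + intro Hc. destruct (proj2 is_cps_fv _ _ _ HC1 _ Hc); auto.
    + eapply is_cps_decl_unique; eauto.
Qed.

(** * Evaluation frames and continuations *)

Definition is_cps_frame (f : frame) (y k : var) (B : decl) : Prop :=
  match f with
  | FHead m1 ms => is_cps_app [y] (m1 :: ms) k B
  | FArg x xs ms => is_cps_app (x :: xs ++ [y]) ms k B
  end.

(* Translating [E[h] : k] for a stack of frames [E] binds one continuation [\y.B] per frame,
   the innermost one, [kn], being the continuation of the hole [h]. *)
Inductive is_cps_frames : list frame -> var -> list (var * val) -> var -> Prop :=
| cpsf_nil : forall k, is_cps_frames [] k [] k
| cpsf_cons : forall f Fs k k' y B L kn,
    ~ In y (k :: fv_frame f) -> k' <> k -> ~ In k' (flat_map fv_frame Fs) ->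
    is_cps_frame f y k B -> is_cps_frames Fs k' L kn -> is_cps_frames (f :: Fs) k ((k', Lam y [] B) :: L) kn.

Lemma tvars_mkApp m args : tvars (mkApp m args) = tvars m ++ tvars_list args.
Proof. destruct args; simpl. - rewrite app_nil_r. auto. - rewrite tvars_App, tvars_list_cons. auto. Qed.

Lemma In_tvars_plug_frame f X w : In w (tvars (plug_frame f X)) <-> In w (tvars X) \/ In w (fv_frame f).
Proof.
  destruct f as [m1 ms|x xs ms]; simpl.
  - rewrite tvars_App. rewrite !in_app_iff. tauto.
  - rewrite tvars_mkApp, tvars_Var. autorewrite with tv. simpl. rewrite !in_app_iff. simpl. tauto.
Qed.

Lemma In_tvars_plug_frames Fs h w : In w (tvars (plug_frames Fs h)) <-> In w (tvars h) \/ In w (flat_map fv_frame Fs).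
Proof.
  induction Fs as [|f Fs IH]; simpl.
  - tauto.
  - change (plug_frames (f :: Fs) h) with (plug_frame f (plug_frames Fs h)). rewrite In_tvars_plug_frame, IH, in_app_iff. tauto.
Qed.

Lemma plug_frame_is_App f X : exists a a1 as', plug_frame f X = App a a1 as'.
Proof.
  destruct f as [m1 ms|x xs ms]; simpl; eauto.
  destruct xs; simpl; eauto.
Qed.

Lemma is_cps_term_mkApp m l k C : l <> [] -> is_cps_app [] (m :: l) k C -> is_cps_term (mkApp m l) k C.
Proof. destruct l; [congruence|]. intros _ H. simpl. constructor. auto. Qed.

Lemma is_cps_app_vars vs : forall acc rest k C, is_cps_app (acc ++ vs) rest k C -> is_cps_app acc (map Var vs ++ rest) k C.
Proof.
  induction vs as [|v vs IH]; intros acc rest k C H; simpl.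
  - rewrite app_nil_r in H. auto.
  - constructor. apply IH. rewrite <- app_assoc. auto.
Qed.

Lemma is_cps_plug_frame_app f y k B k' X CX : is_cps_frame f y k B -> ~ In y (k :: fv_frame f) -> ~ In k' (tvars X) ->
  (exists a a1 as', X = App a a1 as') -> is_cps_term X k' CX -> is_cps_term (plug_frame f X) k (Let k' (Lam y [] B) CX).
Proof.
  intros HB Hy Hk [a [a1 [as' EX]]] HX. subst X. inversion HX; subst.
  destruct f as [m1 ms|x xs ms]; simpl in *.
  - constructor. apply cpsa_app; auto.
  - apply is_cps_term_mkApp; [destruct xs; simpl; congruence|].
    change (Var x :: map Var xs ++ App a a1 as' :: ms) with (map Var (x :: xs) ++ App a a1 as' :: ms).
    apply (is_cps_app_vars (x :: xs) []). simpl. apply cpsa_app; auto.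
Qed.

Lemma is_cps_plug_frame_var f y k B v : is_cps_frame f y k B -> ~ In y (k :: fv_frame f) -> ~ In v (bv_decl B) ->
  is_cps_term (plug_frame f (Var v)) k (subst_decl [(y, v)] B).
Proof.
  intros HB Hy Hv. destruct f as [m1 ms|x xs ms]; simpl in *.
  - constructor. constructor. apply (is_cps_app_rename_last [] y); auto.
  - apply is_cps_term_mkApp; [destruct xs; simpl; congruence|].
    replace (Var x :: map Var xs ++ Var v :: ms) with (map Var (x :: xs ++ [v]) ++ ms)
      by (simpl; rewrite map_app, <- app_assoc; auto).
    apply (is_cps_app_vars (x :: xs ++ [v]) []). simpl.
    change (x :: xs ++ [v]) with ((x :: xs) ++ [v]). apply is_cps_app_rename_last; auto.
Qed.

Lemma is_cps_plug_frames Fs k L kn : is_cps_frames Fs k L kn -> forall h Ch, (Fs <> [] -> exists a a1 as', h = App a a1 as') ->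
  (forall p, In p L -> ~ In (fst p) (tvars h)) -> is_cps_term h kn Ch ->
  is_cps_term (plug_frames Fs h) k (lets_in L Ch).
Proof.
  induction 1; intros h Ch Happ HL Hh; simpl; auto.
  change (plug_frame f (plug_frames Fs h)) with (plug_frame f (plug_frames Fs h)).
  apply is_cps_plug_frame_app; auto.
  - rewrite In_tvars_plug_frames. intros [Hc|Hc]; [apply (HL (k', Lam y [] B)); simpl; auto|auto].
  - destruct Fs as [|f' Fs'].
    + simpl. apply Happ. congruence.
    + simpl. apply plug_frame_is_App.
  - apply IHis_cps_frames; auto.
    + intros _. apply Happ. congruence.
    + intros p Hp. apply HL. simpl. auto.
Qed.

Lemma is_cps_frames_snoc Fs k L kn : is_cps_frames Fs k L kn -> Fs <> [] ->
  exists Fs0 f L0 k0 y B, Fs = Fs0 ++ [f] /\ L = L0 ++ [(kn, Lam y [] B)] /\ is_cps_frames Fs0 k L0 k0 /\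
    is_cps_frame f y k0 B /\ ~ In y (k0 :: fv_frame f) /\ kn <> k0.
Proof.
  induction 1; [congruence|]. intros _.
  destruct Fs as [|f' Fs'].
  - inversion H3; subst. exists [], f, [], k, y, B. repeat split; auto. constructor.
  - destruct IHis_cps_frames as (Fs0 & f0 & L0 & k0 & y0 & B0 & E1 & E2 & HF & HB & Hy & Hk); [congruence|].
    exists (f :: Fs0), f0, ((k', Lam y [] B) :: L0), k0, y0, B0.
    rewrite E1, E2. repeat split; auto. constructor; auto.
    rewrite E1 in H1. rewrite flat_map_app in H1. intro; apply H1; apply in_or_app; auto.
Qed.

Lemma is_cps_frame_exists Sv f y k : exists B, is_cps_frame f y k B /\ (forall b, In b (bv_decl B) -> ~ In b Sv).
Proof.
  destruct f as [m1 ms|x xs ms]; simpl; apply is_cps_app_exists.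
  - left; congruence.
  - left; congruence.
Qed.

Lemma is_cps_frames_exists Sv Fs : forall k, exists L kn, is_cps_frames Fs k L kn /\
  (forall p, In p L -> ~ In (fst p) Sv /\ forall b, In b (bv_val (snd p)) -> ~ In b Sv).
Proof.
  induction Fs as [|f Fs IH]; intros k.
  - exists [], k. split; [constructor|]. intros p [].
  - set (y := fresh (Sv ++ k :: fv_frame f)).
    set (k' := fresh (Sv ++ k :: flat_map fv_frame Fs)).
    destruct (is_cps_frame_exists Sv f y k) as [B [HB HBs]].
    destruct (IH k') as [L [kn [HL HLs]]].
    assert (Hy : forall z, In z (Sv ++ k :: fv_frame f) -> z <> y) by (intros z Hz E; subst; apply fresh_notin in Hz; auto).
    assert (Hk : forall z, In z (Sv ++ k :: flat_map fv_frame Fs) -> z <> k') by (intros z Hz E; subst; apply fresh_notin in Hz; auto).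
    exists ((k', Lam y [] B) :: L), kn. split.
    + constructor; auto.
      * intro Hc. apply (Hy y); auto. apply in_or_app. auto.
      * intro E. apply (Hk k); auto. apply in_or_app. simpl. auto.
      * intro Hc. apply (Hk k'); auto. apply in_or_app. simpl. auto.
    + intros p [Hp|Hp]; [|auto]. subst p. simpl. split.
      * intro Hc. apply (Hk k'); auto. apply in_or_app. auto.
      * intros b [Hb|Hb]; [subst b; intro Hc; apply (Hy y); auto; apply in_or_app; auto|].
        auto.
Qed.

Lemma is_cps_frame_fv f y k B : is_cps_frame f y k B -> forall w, In w (fv_decl B) -> w = k \/ w = y \/ In w (fv_frame f).
Proof.
  intros H w Hw. destruct f as [m1 ms|x xs ms]; simpl in H.
  - apply (is_cps_app_fv _ _ _ _ H) in Hw. simpl in Hw |- *. rewrite tvars_list_cons in Hw. intuition auto with datatypes.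
  - apply (is_cps_app_fv _ _ _ _ H) in Hw. simpl in Hw |- *. rewrite !in_app_iff in Hw. simpl in Hw. intuition auto with datatypes.
Qed.

Lemma is_cps_frames_fv Fs k L kn : is_cps_frames Fs k L kn -> forall p, In p L -> forall w, In w (fv_val (snd p)) ->
  w = k \/ In w (map fst L) \/ In w (flat_map fv_frame Fs).
Proof.
  induction 1; intros p Hp w Hw; [destruct Hp|].
  destruct Hp as [Hp|Hp].
  - subst p. simpl in Hw. apply In_remove_all in Hw. destruct Hw as [Hw Hn].
    destruct (is_cps_frame_fv _ _ _ _ H2 w Hw) as [E|[E|E]]; auto.
    + subst. exfalso. apply Hn. simpl. auto.
    + right. right. simpl. apply in_or_app. auto.
  - destruct (IHis_cps_frames p Hp w Hw) as [E|[E|E]].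
    + subst. right. left. simpl. auto.
    + right. left. simpl. auto.
    + right. right. simpl. apply in_or_app. auto.
Qed.

Lemma is_cps_frames_ak Fs k L kn : is_cps_frames Fs k L kn -> forall p, In p L -> ak_val (snd p).
Proof.
  induction 1; intros p Hp; [destruct Hp|]. destruct Hp as [Hp|Hp]; auto.
  subst. simpl. destruct f; simpl in H2; eapply is_cps_app_ak; eauto.
Qed.

Lemma is_cps_frames_last Fs k L kn : is_cps_frames Fs k L kn -> Fs <> [] -> In kn (map fst L).
Proof.
  induction 1; [congruence|]. intros _. destruct Fs.
  - inversion H3; subst. simpl. auto.
  - simpl. right. apply IHis_cps_frames. congruence.
Qed.

Lemma lets_in_cong L C C' : cong_decl C C' -> cong_decl (lets_in L C) (lets_in L C').
Proof. induction L; simpl; auto. intros. apply cd_let_d. auto. Qed.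

Lemma lets_in_float x v B C : (forall q, In q B -> x <> fst q /\ ~ In x (fv_val (snd q)) /\ ~ In (fst q) (fv_val v)) ->
  cong_decl (Let x v (lets_in B C)) (lets_in B (Let x v C)).
Proof.
  induction B as [|q B IH]; simpl; intros H; [apply cd_refl|].
  destruct (H q (or_introl eq_refl)) as [H1 [H2 H3]].
  eapply cd_trans; [apply cd_swap; auto|]. apply cd_let_d. apply IH. auto.
Qed.

Lemma lets_in_swap A B C : (forall p q, In p A -> In q B -> fst p <> fst q /\ ~ In (fst p) (fv_val (snd q)) /\ ~ In (fst q) (fv_val (snd p))) ->
  cong_decl (lets_in (A ++ B) C) (lets_in (B ++ A) C).
Proof.
  induction A as [|p A IH]; intros H; simpl.
  - rewrite app_nil_r. apply cd_refl.
  - eapply cd_trans; [apply cd_let_d; apply IH; intros; apply H; simpl; auto|].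
    rewrite lets_in_app. rewrite lets_in_app. simpl.
    apply lets_in_float. intros q Hq. apply H; simpl; auto.
Qed.

Definition cps_binding (k : var) (p q : var * val) : Prop := fst q = fst p /\ fst p <> k /\ is_cps_val (snd p) (snd q).

Lemma is_cps_decl_lets_in k ls ls' d C : Forall2 (cps_binding k) ls ls' -> is_cps_decl d k C -> is_cps_decl (lets_in ls d) k (lets_in ls' C).
Proof.
  induction 1; simpl; auto. intros Hd. destruct x as [x v], y as [y V]. destruct H as [E [Hx HV]]. simpl in *. subst.
  constructor; auto.
Qed.

Lemma is_cps_decl_lets_in_inv k ls : forall d C, is_cps_decl (lets_in ls d) k C -> exists ls' C', C = lets_in ls' C' /\ Forall2 (cps_binding k) ls ls' /\ is_cps_decl d k C'.
Proof.
  induction ls as [|[x v] ls IH]; simpl; intros d C H.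
  - exists [], C. split; auto.
  - inversion H; subst. destruct (IH _ _ H7) as [ls' [C' [E [HF HC]]]]. subst.
    exists ((x, V) :: ls'), C'. split; auto. split; auto. constructor; auto. split; simpl; auto.
Qed.

Lemma cps_binding_exists k ls : (forall p, In p ls -> fst p <> k) -> exists ls', Forall2 (cps_binding k) ls ls'.
Proof.
  induction ls as [|[x v] ls IH]; intros H.
  - exists []. constructor.
  - destruct IH as [ls' H']; [intros; apply H; simpl; auto|].
    destruct (is_cps_val_exists [] v) as [V [HV _]]. exists ((x, V) :: ls'). constructor; auto.
    split; [reflexivity|split; [apply (H (x, v)); simpl; auto| exact HV]].
Qed.

Lemma cps_binding_names k ls ls' : Forall2 (cps_binding k) ls ls' -> map fst ls' = map fst ls.
Proof. induction 1; simpl; auto. destruct H as [E _]. rewrite E, IHForall2. auto. Qed.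

Lemma cps_binding_In k ls ls' : Forall2 (cps_binding k) ls ls' -> forall q, In q ls' -> exists p, In p ls /\ cps_binding k p q.
Proof.
  induction 1; intros q Hq; [destruct Hq|]. destruct Hq as [Hq|Hq].
  - subst. exists x. simpl. auto.
  - destruct (IHForall2 q Hq) as [p [Hp Hr]]. exists p. simpl. auto.
Qed.

Lemma ak_lets_in L C : (forall p, In p L -> ak_val (snd p)) -> ak_decl C -> ak_decl (lets_in L C).
Proof. induction L; simpl; intros; auto. Qed.

Lemma cps_binding_ak k ls ls' : Forall2 (cps_binding k) ls ls' -> forall q, In q ls' -> ak_val (snd q).
Proof. intros H q Hq. destruct (cps_binding_In _ _ _ H q Hq) as [p [_ [_ [_ Hc]]]]. eapply (proj1 is_cps_ak); eauto. Qed.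

Lemma allvars_lets_in_body ls d w : In w (allvars_decl d) -> In w (allvars_decl (lets_in ls d)).
Proof. induction ls; simpl; auto. intros. apply allvars_let_body. auto. Qed.

Lemma allvars_lets_in_binding ls d p : In p ls -> In (fst p) (allvars_decl (lets_in ls d)) /\
   (forall w, In w (allvars_val (snd p)) -> In w (allvars_decl (lets_in ls d))).
Proof.
  induction ls as [|q ls IH]; simpl; intros Hp; [destruct Hp|]. destruct Hp as [Hp|Hp].
  - subst. split; [apply allvars_let_var|]. intros; apply allvars_let_val; auto.
  - destruct (IH Hp) as [H1 H2]. split; [apply allvars_let_body; auto|]. intros; apply allvars_let_body; auto.
Qed.

Lemma bv_lets_in_binding ls d p : In p ls -> In (fst p) (bv_decl (lets_in ls d)).
Proof.
  induction ls as [|q ls IH]; simpl; intros Hp; [destruct Hp|]. destruct Hp as [Hp|Hp].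
  - subst. simpl. auto.
  - simpl. right. apply in_or_app. auto.
Qed.

Lemma allvars_ret m w : In w (tvars m) -> In w (allvars_decl (Ret m)).
Proof. unfold allvars_decl. simpl. rewrite app_nil_r. auto. Qed.

(** * Simulation of a base reduction step *)

Lemma split_let x v d : split_decl (Let x v d) = ((x, v) :: fst (split_decl d), snd (split_decl d)).
Proof. simpl. destruct (split_decl d); reflexivity. Qed.

Lemma split_plugD E d : split_decl (plugD E d) = (ec_lets E ++ fst (split_decl d), plug_frames (ec_frames E) (snd (split_decl d))).
Proof. rewrite plugD_lets_in, split_lets_in. simpl. rewrite app_nil_r. reflexivity. Qed.

Lemma plug_frames_app a b h : plug_frames (a ++ b) h = plug_frames a (plug_frames b h).
Proof. unfold plug_frames. apply fold_right_app. Qed.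

Lemma plugD_let_plugD E E' x v d : plugD E (Let x v (plugD E' d)) =
  lets_in (ec_lets E ++ (x, v) :: ec_lets E' ++ fst (split_decl d)) (Ret (plug_frames (ec_frames E ++ ec_frames E') (snd (split_decl d)))).
Proof. rewrite plugD_lets_in, split_let, split_plugD. simpl. rewrite plug_frames_app. reflexivity. Qed.

Lemma cps_binding_cont kn k ls ls' : Forall2 (cps_binding kn) ls ls' -> (forall p, In p ls -> fst p <> k) -> Forall2 (cps_binding k) ls ls'.
Proof.
  induction 1; intros H'; constructor.
  - destruct H as [E1 [E2 E3]]. split; auto. split; auto. apply H'. simpl; auto.
  - apply IHForall2. intros; apply H'; simpl; auto.
Qed.

Lemma fv_allvars_val v w : In w (fv_val v) -> In w (allvars_val v).
Proof. unfold allvars_val. intros; apply in_or_app; auto. Qed.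

Lemma red_ak_intro X Y B A : ak_decl X -> ak_decl Y -> ak_decl B -> ak_decl A ->
  cong_decl X B -> base (fun E => ec_frames E = []) B A -> cong_decl A Y -> red_ak X Y.
Proof. intros. split; auto. split; auto. exists B, A. auto. Qed.

Lemma lets_in_cons x v l C : lets_in ((x, v) :: l) C = Let x v (lets_in l C).
Proof. reflexivity. Qed.

Ltac normalize_lets := repeat (rewrite lets_in_app || rewrite lets_in_cons).

Lemma base_lets_in A A' x y ys B z zs :
  length ys = length zs ->
  (forall w, In w (z :: zs) -> ~ In w (bv_decl B)) ->
  ~ In x (map fst A') ->
  (forall w, In w (map fst A') -> ~ In w (fv_val (Lam y ys B))) ->
  base (fun E => ec_frames E = [])
    (lets_in A (Let x (Lam y ys B) (lets_in A' (Ret (App (Var x) (Var z) (map Var zs))))))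
    (lets_in A (Let x (Lam y ys B) (lets_in A' (subst_decl (subst_of (y :: ys) (z :: zs)) B)))).
Proof.
  intros Hlen Hz Hx Hlets.
  set (E := {| ec_lets := A; ec_frames := [] |}).
  set (E' := {| ec_lets := A'; ec_frames := [] |}).
  pose proof (base_beta (fun E => ec_frames E = []) E E' x y ys B z zs eq_refl eq_refl Hlen Hz Hx Hlets
    (plug_ok_no_frames E' _ eq_refl) (plug_ok_no_frames E _ eq_refl) (plug_ok_no_frames E _ eq_refl)) as Hb.
  rewrite !plugD_no_frames in Hb by reflexivity. exact Hb.
Qed.

Lemma red_ak_cont_apply A kn y B v Y :
  (forall p, In p A -> ak_val (snd p)) -> ak_decl B ->
  ~ In v (bv_decl B) -> ~ In kn (fv_decl (subst_decl [(y, v)] B)) ->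
  ak_decl Y -> cong_decl (lets_in A (subst_decl [(y, v)] B)) Y ->
  red_ak (lets_in A (Let kn (Lam y [] B) (Ret (App (Var kn) (Var v) [])))) Y.
Proof.
  intros HA HB Hv Hkn HY HcY.
  assert (Hbase := base_lets_in A [] kn y [] B v [] eq_refl).
  apply (red_ak_intro _ _ (lets_in A (Let kn (Lam y [] B) (Ret (App (Var kn) (Var v) []))))
                      (lets_in A (Let kn (Lam y [] B) (subst_decl [(y, v)] B)))).
  - apply ak_lets_in; [exact HA|]. simpl. split; [exact HB|]. exists kn, v, []. reflexivity.
  - exact HY.
  - apply ak_lets_in; [exact HA|]. simpl. split; [exact HB|]. exists kn, v, []. reflexivity.
  - apply ak_lets_in; [exact HA|]. simpl. split; [exact HB|]. exact (proj2 ak_subst _ HB _).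
  - apply cd_refl.
  - apply Hbase; [intros w [Hw|[]]; subst w; exact Hv|intros []|intros w []].
  - eapply cd_trans; [|exact HcY]. apply lets_in_cong. apply cd_gc. exact Hkn.
Qed.

Section BetaStep.
Variables (A A' Dl : list (var * val)) (Fs : list frame) (x y z k : var) (ys zs : list var)
  (D : decl) (M : term).

Let redex := lets_in (A ++ (x, Lam y ys D) :: A') (Ret (plug_frames Fs (App (Var x) (Var z) (map Var zs)))).
Let contractum := lets_in (A ++ (x, Lam y ys D) :: A' ++ Dl) (Ret (plug_frames Fs M)).

Hypothesis Hlen : length ys = length zs.
Hypothesis Hz : forall w, In w (z :: zs) -> ~ In w (bv_decl D).
Hypothesis Hx : ~ In x (map fst A').
Hypothesis Hlets : forall w, In w (map fst A') -> ~ In w (fv_val (Lam y ys D)).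
Hypothesis Hok : forall w, In w (map fst Dl) -> ~ In w (flat_map fv_frame Fs).
Hypothesis HDl : subst_decl (subst_of (y :: ys) (z :: zs)) D = lets_in Dl (Ret M).
Hypothesis Hk_redex : ~ In k (allvars_decl redex).
Hypothesis Hk_contractum : ~ In k (allvars_decl contractum).

(* The administrative names of the translations below are chosen outside [Sv]. *)
Let Sv := k :: allvars_decl redex ++ allvars_decl contractum.

Lemma beta_Sv_redex w : In w (allvars_decl redex) -> In w Sv.
Proof. intros; simpl; right; apply in_or_app; auto. Qed.

Lemma beta_Sv_contractum w : In w (allvars_decl contractum) -> In w Sv.
Proof. intros; simpl; right; apply in_or_app; auto. Qed.

Lemma beta_Sv_call w : In w (tvars (App (Var x) (Var z) (map Var zs))) -> In w Sv.
Proof. intros; apply beta_Sv_redex, allvars_lets_in_body, allvars_ret, In_tvars_plug_frames; auto. Qed.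

Lemma beta_Sv_frames w : In w (flat_map fv_frame Fs) -> In w Sv.
Proof. intros; apply beta_Sv_redex, allvars_lets_in_body, allvars_ret, In_tvars_plug_frames; auto. Qed.

Lemma beta_Sv_result w : In w (tvars M) -> In w Sv.
Proof. intros; apply beta_Sv_contractum, allvars_lets_in_body, allvars_ret, In_tvars_plug_frames; auto. Qed.

Lemma beta_Sv_lets p : In p (A ++ (x, Lam y ys D) :: A') ->
  In (fst p) Sv /\ forall w, In w (allvars_val (snd p)) -> In w Sv.
Proof.
  intros Hp. destruct (allvars_lets_in_binding _ (Ret (plug_frames Fs (App (Var x) (Var z) (map Var zs)))) p Hp) as [H1 H2].
  split; [|intros]; apply beta_Sv_redex; auto.
Qed.

Lemma beta_Sv_lam w : In w (allvars_val (Lam y ys D)) -> In w Sv.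
Proof. apply (beta_Sv_lets (x, Lam y ys D)). apply in_or_app. simpl. auto. Qed.

Lemma beta_Sv_body_lets p : In p Dl ->
  In (fst p) (bv_decl contractum) /\ In (fst p) Sv /\ forall w, In w (allvars_val (snd p)) -> In w Sv.
Proof.
  intros Hp. assert (Hp' : In p (A ++ (x, Lam y ys D) :: A' ++ Dl)) by solve_In.
  destruct (allvars_lets_in_binding _ (Ret (plug_frames Fs M)) p Hp') as [H1 H2].
  split; [apply bv_lets_in_binding; auto|]. split; [|intros]; apply beta_Sv_contractum; auto.
Qed.

Lemma beta_cont_fresh_lets p : In p (A ++ (x, Lam y ys D) :: A') -> fst p <> k.
Proof. intros Hp E0. apply Hk_redex. rewrite <- E0. exact (proj1 (allvars_lets_in_binding _ _ p Hp)). Qed.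

Lemma beta_cont_fresh_body_lets p : In p Dl -> fst p <> k.
Proof. intros Hp E0. apply Hk_contractum. rewrite <- E0. apply bv_allvars_decl. apply beta_Sv_body_lets. auto. Qed.

Section Translations.
Variables (L : list (var * val)) (kn : var) (k0 : var) (B : decl) (LA LA' : list (var * val)).
Hypothesis HL : is_cps_frames Fs k L kn.
Hypothesis HLs : forall p, In p L -> ~ In (fst p) Sv /\ forall b, In b (bv_val (snd p)) -> ~ In b Sv.
Hypothesis Hk0D : ~ In k0 (allvars_decl D).
Hypothesis Hk0y : ~ In k0 (y :: ys).
Hypothesis HB : is_cps_decl D k0 B.
Hypothesis HBb : forall b, In b (bv_decl B) -> In b (bv_decl D) \/ ~ In b (Sv ++ map fst L).
Hypothesis HLA : Forall2 (cps_binding k) A LA.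
Hypothesis HLA' : Forall2 (cps_binding k) A' LA'.

Let lam := Lam y (ys ++ [k0]) B.
Let call := Ret (App (Var x) (Var z) (map Var (zs ++ [kn]))).
Let body := subst_decl (subst_of (y :: ys ++ [k0]) (z :: zs ++ [kn])) B.

Lemma beta_frames_cont_cases : (Fs = [] /\ kn = k) \/ (Fs <> [] /\ In kn (map fst L)).
Proof.
  assert (HFd : Fs = [] \/ Fs <> []) by (destruct Fs; [left|right]; congruence).
  destruct HFd as [HF|HF]; [left|right]; split; auto.
  - rewrite HF in HL. inversion HL. reflexivity.
  - exact (is_cps_frames_last _ _ _ _ HL HF).
Qed.

Lemma beta_frames_cont : In kn Sv \/ In kn (map fst L).
Proof.
  destruct beta_frames_cont_cases as [[_ Ekn]|[_ Hn]]; [left|right; exact Hn].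
  rewrite Ekn. apply in_eq.
Qed.

Lemma beta_frames_cont_fresh : ~ In kn (bv_decl D).
Proof.
  intro Hc. destruct beta_frames_cont_cases as [[_ Ekn]|[_ Hn]].
  - apply Hk_redex. rewrite <- Ekn. apply (allvars_lets_in_binding _ _ (x, Lam y ys D)).
    + apply in_or_app. simpl. auto.
    + apply allvars_lam_body. apply bv_allvars_decl. exact Hc.
  - apply in_map_iff in Hn. destruct Hn as [p [Ep Hp]]. apply (proj1 (HLs p Hp)). rewrite Ep.
    apply beta_Sv_lam, allvars_lam_body, bv_allvars_decl. exact Hc.
Qed.

Lemma beta_cps_lam : is_cps_val (Lam y ys D) lam.
Proof. apply cpsv_lam; auto. intro; apply Hk0D; apply fv_allvars_decl; auto. Qed.

Lemma beta_cps_lets : Forall2 (cps_binding k) (A ++ (x, Lam y ys D) :: A') (LA ++ (x, lam) :: LA').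
Proof.
  apply Forall2_app; auto. constructor; auto.
  split; [reflexivity|split; [|exact beta_cps_lam]].
  apply (beta_cont_fresh_lets (x, Lam y ys D)). apply in_or_app. simpl. auto.
Qed.

Lemma beta_cps_redex : is_cps_decl redex k (lets_in (LA ++ (x, lam) :: LA') (lets_in L call)).
Proof.
  apply is_cps_decl_lets_in; [exact beta_cps_lets|]. constructor.
  apply (is_cps_plug_frames _ _ _ _ HL); [intros _; eauto| |].
  - intros p Hp Hc. apply (proj1 (HLs p Hp)). apply beta_Sv_call. exact Hc.
  - constructor. apply (is_cps_app_vars [x; z] [] (map Var zs) kn). simpl.
    pose proof (is_cps_app_vars zs [x; z] [] kn call) as Hv. rewrite app_nil_r in Hv. apply Hv.
    exact (cpsa_done x (z :: zs) kn).
Qed.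

Lemma beta_args_fresh w : In w ((z :: zs) ++ [kn]) -> ~ In w (bv_decl B).
Proof.
  intros Hw Hc. apply in_app_or in Hw.
  destruct (HBb w Hc) as [Hd|Hd]; destruct Hw as [Hw|[Hw|[]]].
  - exact (Hz w Hw Hd).
  - rewrite <- Hw in Hd. exact (beta_frames_cont_fresh Hd).
  - apply Hd, in_or_app. left. apply beta_Sv_call. autorewrite with tv. simpl. right. exact Hw.
  - rewrite <- Hw in Hd. apply Hd, in_or_app. destruct beta_frames_cont; auto.
Qed.

Lemma beta_cps_body : is_cps_decl (lets_in Dl (Ret M)) kn body.
Proof.
  rewrite <- HDl. apply (is_cps_decl_subst_params D k0 B (y :: ys) (z :: zs) kn); auto.
  - intro; apply Hk0D; apply fv_allvars_decl; auto.
  - simpl; auto.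
  - exact beta_args_fresh.
Qed.

Variables (Dl' : list (var * val)) (CM : decl).
Hypothesis HDl' : Forall2 (cps_binding kn) Dl Dl'.
Hypothesis HCM : is_cps_term M kn CM.
Hypothesis Hbody : body = lets_in Dl' CM.

Lemma beta_cps_contractum_lets :
  Forall2 (cps_binding k) (A ++ (x, Lam y ys D) :: A' ++ Dl) (LA ++ (x, lam) :: LA' ++ Dl').
Proof.
  apply Forall2_app; [exact HLA|]. constructor.
  - split; [reflexivity|split; [|exact beta_cps_lam]].
    apply (beta_cont_fresh_lets (x, Lam y ys D)). apply in_or_app. simpl. auto.
  - apply Forall2_app; [exact HLA'|]. exact (cps_binding_cont _ _ _ _ HDl' beta_cont_fresh_body_lets).
Qed.

Lemma beta_ak_lets p : In p (LA ++ (x, lam) :: LA' ++ Dl' ++ L) -> ak_val (snd p).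
Proof.
  intros Hp.
  replace (LA ++ (x, lam) :: LA' ++ Dl' ++ L) with ((LA ++ (x, lam) :: LA') ++ Dl' ++ L) in Hp
    by (rewrite <- app_assoc; reflexivity).
  apply in_app_or in Hp. destruct Hp as [Hp|Hp]; [exact (cps_binding_ak _ _ _ beta_cps_lets p Hp)|].
  apply in_app_or in Hp. destruct Hp as [Hp|Hp]; [exact (cps_binding_ak _ _ _ HDl' p Hp)|].
  exact (is_cps_frames_ak _ _ _ _ HL p Hp).
Qed.

Lemma beta_swap_frames_body : cong_decl (lets_in L (lets_in Dl' CM)) (lets_in Dl' (lets_in L CM)).
Proof.
  rewrite <- !lets_in_app. apply lets_in_swap. intros p q Hp Hq.
  destruct (cps_binding_In _ _ _ HDl' q Hq) as [p0 [Hp0 [Eq [_ Hv]]]].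
  destruct (beta_Sv_body_lets p0 Hp0) as [_ [Hs0 Ha0]].
  split; [|split].
  - intro E0. apply (proj1 (HLs p Hp)). rewrite E0, Eq. exact Hs0.
  - intro Hc. apply (proj1 (HLs p Hp)). apply Ha0. apply fv_allvars_val. exact (proj1 is_cps_fv _ _ Hv _ Hc).
  - intro Hc. rewrite Eq in Hc. destruct (is_cps_frames_fv _ _ _ _ HL p Hp _ Hc) as [E0|[E0|E0]].
    + exact (beta_cont_fresh_body_lets p0 Hp0 E0).
    + apply in_map_iff in E0. destruct E0 as [p1 [Ep1 Hp1]]. apply (proj1 (HLs p1 Hp1)). rewrite Ep1. exact Hs0.
    + apply (Hok (fst p0)); [apply in_map; exact Hp0|exact E0].
Qed.

(* The translated call [@(x, z, zs, kn)] is the redex of the simulating step. *)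
Lemma beta_first_step C1 Y : is_cps_decl redex k C1 -> ak_decl Y ->
  cong_decl (lets_in (LA ++ (x, lam) :: LA' ++ Dl' ++ L) CM) Y -> red_ak C1 Y.
Proof.
  intros HC1 HY HcY.
  assert (Ebefore : lets_in LA (Let x lam (lets_in (LA' ++ L) call)) = lets_in (LA ++ (x, lam) :: LA') (lets_in L call))
    by (normalize_lets; reflexivity).
  apply (red_ak_intro C1 Y (lets_in LA (Let x lam (lets_in (LA' ++ L) call)))
                            (lets_in LA (Let x lam (lets_in (LA' ++ L) body)))).
  - exact (proj2 is_cps_ak _ _ _ HC1).
  - exact HY.
  - rewrite Ebefore. exact (proj2 is_cps_ak _ _ _ beta_cps_redex).
  - rewrite Hbody. apply ak_lets_in; [intros; apply beta_ak_lets; solve_In|].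
    split; [exact (proj1 is_cps_ak _ _ beta_cps_lam)|].
    apply ak_lets_in; [intros; apply beta_ak_lets; solve_In|].
    apply ak_lets_in; [intros; apply beta_ak_lets; solve_In|].
    exact (proj2 is_cps_ak _ _ _ (cpsd_ret _ _ _ HCM)).
  - rewrite Ebefore. exact (is_cps_decl_unique _ _ _ _ HC1 beta_cps_redex).
  - apply base_lets_in.
    + rewrite !length_app. simpl. lia.
    + exact beta_args_fresh.
    + rewrite map_app, (cps_binding_names _ _ _ HLA'). intro Hc.
      apply in_app_or in Hc. destruct Hc as [Hc|Hc]; [exact (Hx Hc)|].
      apply in_map_iff in Hc. destruct Hc as [p [Ep Hp]]. apply (proj1 (HLs p Hp)). rewrite Ep.
      refine (proj1 (beta_Sv_lets (x, Lam y ys D) _)). apply in_or_app. simpl. auto.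
    + intros w Hw Hc. apply (proj1 is_cps_fv _ _ beta_cps_lam) in Hc.
      rewrite map_app, (cps_binding_names _ _ _ HLA') in Hw.
      apply in_app_or in Hw. destruct Hw as [Hw|Hw]; [exact (Hlets w Hw Hc)|].
      apply in_map_iff in Hw. destruct Hw as [p [Ep Hp]]. apply (proj1 (HLs p Hp)). rewrite Ep.
      apply beta_Sv_lam, fv_allvars_val. exact Hc.
  - eapply cd_trans; [|exact HcY]. rewrite Hbody. normalize_lets.
    apply lets_in_cong, cd_let_d, lets_in_cong. exact beta_swap_frames_body.
Qed.

Lemma beta_sim_one_step C1 C2 : (Fs = [] \/ exists a a1 as', M = App a a1 as') ->
  is_cps_decl redex k C1 -> is_cps_decl contractum k C2 -> red_ak C1 C2.
Proof.
  intros HM HC1 HC2. apply beta_first_step; [exact HC1|exact (proj2 is_cps_ak _ _ _ HC2)|].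
  eapply is_cps_decl_unique; [|exact HC2].
  replace (LA ++ (x, lam) :: LA' ++ Dl' ++ L) with ((LA ++ (x, lam) :: LA' ++ Dl') ++ L)
    by (rewrite <- app_assoc; simpl; rewrite <- app_assoc; reflexivity).
  rewrite lets_in_app. apply is_cps_decl_lets_in; [exact beta_cps_contractum_lets|]. constructor.
  apply (is_cps_plug_frames _ _ _ _ HL); [|intros p Hp Hc|exact HCM].
  - intros HFs. destruct HM as [HM|HM]; [contradiction|exact HM].
  - apply (proj1 (HLs p Hp)). apply beta_Sv_result. exact Hc.
Qed.

(* A variable result inside a frame needs a second step: applying the frame's continuation. *)
Lemma beta_sim_two_steps C1 C2 v : Fs <> [] -> M = Var v ->
  is_cps_decl redex k C1 -> is_cps_decl contractum k C2 -> clos_trans decl red_ak C1 C2.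
Proof.
  intros HFs HM HC1 HC2.
  destruct (is_cps_frames_snoc _ _ _ _ HL HFs) as (Fs0 & f & L0 & k0' & yl & Bl & EFs & EL & HL0 & Hfi & Hyl & Hknk).
  assert (ECM : CM = Ret (App (Var kn) (Var v) [])) by (rewrite HM in HCM; inversion HCM; reflexivity).
  assert (HinL : In (kn, Lam yl [] Bl) L) by (rewrite EL; apply in_or_app; simpl; auto).
  assert (HvS : In v Sv) by (apply beta_Sv_result; rewrite HM, tvars_Var; simpl; auto).
  assert (HfS : forall w, In w (fv_frame f) -> In w Sv).
  { intros w Hw. apply beta_Sv_frames. rewrite EFs, flat_map_app. apply in_or_app. right. simpl. rewrite app_nil_r. exact Hw. }
  assert (Hv : ~ In v (bv_decl Bl)) by (intro Hc; apply (proj2 (HLs _ HinL) v); [simpl; auto|exact HvS]).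
  apply t_trans with (lets_in (LA ++ (x, lam) :: LA' ++ Dl' ++ L0) (Let kn (Lam yl [] Bl) CM)).
  - apply t_step. apply beta_first_step; [exact HC1| |].
    + apply ak_lets_in; [intros p Hp; apply beta_ak_lets; rewrite EL; solve_In|].
      split; [exact (is_cps_frames_ak _ _ _ _ HL _ HinL)|]. rewrite ECM. exists kn, v, []. reflexivity.
    + rewrite EL. normalize_lets. apply cd_refl.
  - rewrite ECM. apply t_step. apply red_ak_cont_apply.
    + intros p Hp. apply beta_ak_lets. rewrite EL. solve_In.
    + exact (is_cps_frames_ak _ _ _ _ HL _ HinL).
    + exact Hv.
    + intro Hc. apply fv_subst in Hc. destruct Hc as [u [Hu Eu]]. rewrite assoc1 in Eu.
      destruct (Nat.eqb yl u) eqn:Ey.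
      * apply (proj1 (HLs _ HinL)). simpl. rewrite Eu. exact HvS.
      * destruct (is_cps_frame_fv _ _ _ _ Hfi u Hu) as [E|[E|E]].
        -- apply Hknk. congruence.
        -- apply Nat.eqb_neq in Ey. congruence.
        -- apply (proj1 (HLs _ HinL)). simpl. rewrite Eu. apply HfS. exact E.
    + exact (proj2 is_cps_ak _ _ _ HC2).
    + eapply is_cps_decl_unique; [|exact HC2].
      replace (LA ++ (x, lam) :: LA' ++ Dl' ++ L0) with ((LA ++ (x, lam) :: LA' ++ Dl') ++ L0)
        by (rewrite <- app_assoc; simpl; rewrite <- app_assoc; reflexivity).
      rewrite lets_in_app. apply is_cps_decl_lets_in; [exact beta_cps_contractum_lets|]. constructor.
      rewrite HM, EFs, plug_frames_app. simpl. apply (is_cps_plug_frames _ _ _ _ HL0).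
      * intros _. apply plug_frame_is_App.
      * intros p Hp Hc. apply In_tvars_plug_frame in Hc.
        assert (HpL : In p L) by (rewrite EL; solve_In). apply (proj1 (HLs p HpL)).
        destruct Hc as [Hc|Hc]; [rewrite tvars_Var in Hc; destruct Hc as [Hc|[]]; rewrite <- Hc; exact HvS|].
        apply HfS. exact Hc.
      * apply is_cps_plug_frame_var; auto.
Qed.

End Translations.

Lemma beta_sim C1 C2 : is_cps_decl redex k C1 -> is_cps_decl contractum k C2 -> clos_trans decl red_ak C1 C2.
Proof.
  intros HC1 HC2.
  destruct (is_cps_frames_exists Sv Fs k) as [L [kn [HL HLs]]].
  set (k0 := fresh (Sv ++ map fst L ++ y :: ys)).
  assert (Hk0D : ~ In k0 (allvars_decl D)).
  { apply fresh_notin_incl. intros w Hw. apply in_or_app. left. apply beta_Sv_lam, allvars_lam_body. exact Hw. }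
  assert (Hk0y : ~ In k0 (y :: ys)) by (apply fresh_notin_incl; intros; solve_In).
  destruct (is_cps_decl_exists (Sv ++ map fst L) D k0 Hk0D) as [B [HB HBb]].
  destruct (cps_binding_exists k A) as [LA HLA]; [intros p Hp; apply beta_cont_fresh_lets; solve_In|].
  destruct (cps_binding_exists k A') as [LA' HLA']; [intros p Hp; apply beta_cont_fresh_lets; solve_In|].
  assert (Hbody : is_cps_decl (lets_in Dl (Ret M)) kn (subst_decl (subst_of (y :: ys ++ [k0]) (z :: zs ++ [kn])) B))
    by (eapply beta_cps_body; eauto).
  destruct (is_cps_decl_lets_in_inv _ _ _ _ Hbody) as [Dl' [CM [Ebody [HDl' HCMd]]]].
  assert (HCM : is_cps_term M kn CM) by (inversion HCMd; assumption).
  assert (HFd : Fs = [] \/ Fs <> []) by (destruct Fs; [left|right]; congruence).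
  assert (HMd : (exists v, M = Var v) \/ (exists a a1 as', M = App a a1 as')) by (destruct M; eauto).
  destruct HFd as [HF|HF]; [apply t_step; eapply beta_sim_one_step; eauto|].
  destruct HMd as [[v HM]|HM]; [eapply beta_sim_two_steps; eauto|].
  apply t_step. eapply beta_sim_one_step; eauto.
Qed.

End BetaStep.

Lemma cps_simulates_base D1 D2 k : base (fun _ => True) D1 D2 ->
  ~ In k (allvars_decl D1) -> ~ In k (allvars_decl D2) ->
  forall C1 C2, is_cps_decl D1 k C1 -> is_cps_decl D2 k C2 -> clos_trans decl red_ak C1 C2.
Proof.
  intros Hb HkD1 HkD2 C1 C2 HC1 HC2.
  destruct Hb as [E E' x y ys D z zs _ _ Hlen Hz Hx Hlets Hok2 _ Hok3].
  set (Dz := subst_decl (subst_of (y :: ys) (z :: zs)) D) in *.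
  assert (E1 : plugD E (Let x (Lam y ys D) (plugD E' (Ret (App (Var x) (Var z) (map Var zs))))) =
    lets_in (ec_lets E ++ (x, Lam y ys D) :: ec_lets E')
      (Ret (plug_frames (ec_frames E ++ ec_frames E') (App (Var x) (Var z) (map Var zs)))))
    by (rewrite plugD_let_plugD; simpl; rewrite app_nil_r; reflexivity).
  rewrite E1 in HC1, HkD1. rewrite plugD_let_plugD in HC2, HkD2.
  assert (HDl : Dz = lets_in (fst (split_decl Dz)) (Ret (snd (split_decl Dz)))) by apply lets_in_split.
  assert (Hok : forall w, In w (map fst (fst (split_decl Dz))) ->
                          ~ In w (flat_map fv_frame (ec_frames E ++ ec_frames E'))).
  { intros w Hw Hc. rewrite flat_map_app in Hc. apply in_app_or in Hc. destruct Hc as [Hc|Hc].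
    - apply (Hok3 w); auto. rewrite split_let, split_plugD. simpl. right. rewrite map_app. apply in_or_app. auto.
    - apply (Hok2 w); auto. }
  exact (beta_sim _ _ _ _ x y z k ys zs D _ Hlen Hz Hx Hlets Hok HDl HkD1 HkD2 C1 C2 HC1 HC2).
Qed.

Lemma red_ak_cong_l X Y X' : red_ak X Y -> ak_decl X' -> cong_decl X' X -> red_ak X' Y.
Proof.
  intros [H1 [H2 [B [A' [H3 [H4 [H5 [H6 H7]]]]]]]] Ha Hc.
  split; auto. split; auto. exists B, A'. repeat split; auto. eapply cd_trans; eauto.
Qed.

Lemma red_ak_cong_r X Y Y' : red_ak X Y -> ak_decl Y' -> cong_decl Y Y' -> red_ak X Y'.
Proof.
  intros [H1 [H2 [B [A' [H3 [H4 [H5 [H6 H7]]]]]]]] Ha Hc.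
  split; auto. split; auto. exists B, A'. repeat split; auto. eapply cd_trans; eauto.
Qed.

Lemma clos_trans_red_ak_cong_l X Y : clos_trans decl red_ak X Y -> forall X', ak_decl X' -> cong_decl X' X -> clos_trans decl red_ak X' Y.
Proof.
  induction 1; intros X' Ha Hc.
  - apply t_step. eapply red_ak_cong_l; eauto.
  - eapply t_trans; [apply IHclos_trans1; eauto|]. auto.
Qed.

Lemma clos_trans_red_ak_cong_r X Y : clos_trans decl red_ak X Y -> forall Y', ak_decl Y' -> cong_decl Y Y' -> clos_trans decl red_ak X Y'.
Proof.
  induction 1; intros Y' Ha Hc.
  - apply t_step. eapply red_ak_cong_r; eauto.
  - eapply t_trans; [eauto|]. apply IHclos_trans2; auto.
Qed.

Lemma cps_simulates_red (D D' : decl) (k : var) :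
  ~ In k (allvars_decl D) -> ~ In k (allvars_decl D') -> red_a D D' ->
  clos_trans decl red_ak (cps_decl D k) (cps_decl D' k).
Proof.
  intros HkD HkD' [D1 [D2 [Hc1 [Hb Hc2]]]].
  set (ks := fresh (k :: allvars_decl D ++ allvars_decl D1 ++ allvars_decl D2 ++ allvars_decl D')).
  assert (K0 : ~ In ks [k]) by (apply fresh_notin_incl; intros; solve_In).
  assert (K1 : ~ In ks (allvars_decl D)) by (apply fresh_notin_incl; intros; solve_In).
  assert (K2 : ~ In ks (allvars_decl D1)) by (apply fresh_notin_incl; intros; solve_In).
  assert (K3 : ~ In ks (allvars_decl D2)) by (apply fresh_notin_incl; intros; solve_In).
  assert (K4 : ~ In ks (allvars_decl D')) by (apply fresh_notin_incl; intros; solve_In).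
  destruct (is_cps_decl_exists [] D ks K1) as [CD [HCD _]].
  destruct (is_cps_decl_exists [] D1 ks K2) as [CD1 [HCD1 _]].
  destruct (is_cps_decl_exists [] D2 ks K3) as [CD2 [HCD2 _]].
  destruct (is_cps_decl_exists [] D' ks K4) as [CD' [HCD' _]].
  assert (Hmid : clos_trans decl red_ak CD CD').
  { apply clos_trans_red_ak_cong_l with CD1;
      [| exact (proj2 is_cps_ak _ _ _ HCD) | exact (proj2 is_cps_cong D D1 Hc1 ks K1 K2 CD CD1 HCD HCD1)].
    apply clos_trans_red_ak_cong_r with CD2;
      [| exact (proj2 is_cps_ak _ _ _ HCD') | exact (proj2 is_cps_cong D2 D' Hc2 ks K3 K4 CD2 CD' HCD2 HCD')].
    exact (cps_simulates_base D1 D2 ks Hb K2 K3 CD1 CD2 HCD1 HCD2). }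
  pose proof (cps_decl_spec D k HkD) as I1. pose proof (cps_decl_spec D' k HkD') as I2.
  apply clos_trans_red_ak_cong_l with (ren_decl (swap ks k) CD);
    [| exact (proj2 is_cps_ak _ _ _ I1)
     | eapply is_cps_decl_unique; [exact I1|apply (is_cps_decl_swap_cont D); auto]].
  apply clos_trans_red_ak_cong_r with (ren_decl (swap ks k) CD');
    [| exact (proj2 is_cps_ak _ _ _ I2)
     | eapply is_cps_decl_unique; [apply (is_cps_decl_swap_cont D'); auto|exact I2]].
  exact (clos_trans_red_ak_ren _ (swap_inj ks k) _ _ Hmid).
Qed.

(** * Typing *)

Lemma psi_arr A1 As B : psi (TArr A1 As B) = TArr (psi A1) (map psi As ++ [Kty B]) TR.
Proof. reflexivity. Qed.

Definition psi_binding (p : var * ty) := (fst p, psi (snd p)).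

Lemma lookup_app l G v : lookup (l ++ G) v = match lookup l v with Some t => Some t | None => lookup G v end.
Proof. induction l as [|[a t] l IH]; simpl; auto. destruct (Nat.eqb a v); auto. Qed.

Lemma lookup_map l v : lookup (map psi_binding l) v = option_map psi (lookup l v).
Proof. induction l as [|[a t] l IH]; simpl; auto. destruct (Nat.eqb a v); auto. Qed.

Lemma lookup_None l v : lookup l v = None -> ~ In v (map fst l).
Proof.
  induction l as [|[a t] l IH]; simpl; auto. destruct (Nat.eqb a v) eqn:E; [discriminate|].
  intros H [H'|H']; [subst; rewrite Nat.eqb_refl in E; discriminate| apply IH; auto].
Qed.

Lemma map_fst_combine {A B} (ys : list A) (As : list B) : length ys = length As -> map fst (combine ys As) = ys.
Proof. revert As. induction ys; destruct As; simpl; intros; try discriminate; auto. f_equal. auto. Qed.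

Lemma rev_combine_map ys As : rev (combine ys (map psi As)) = map psi_binding (rev (combine ys As)).
Proof.
  rewrite map_rev. f_equal. revert As. induction ys; destruct As; simpl; auto. f_equal. auto.
Qed.

Definition ctx_agree (Dl : tctx) (G : tctx) (V : list var) := forall v, In v V -> lookup Dl v = option_map psi (lookup G v).

Lemma lookup_extend Dl G ys As v : length ys = length As ->
  (lookup Dl v = option_map psi (lookup G v) \/ In v ys) ->
  lookup (extend Dl ys (map psi As)) v = option_map psi (lookup (extend G ys As) v).
Proof.
  intros Hl H. unfold extend. rewrite rev_combine_map, !lookup_app, lookup_map.
  destruct (lookup (rev (combine ys As)) v) eqn:E; simpl; auto.
  destruct H as [H|H]; auto. exfalso. apply lookup_None in E. apply E.
  rewrite map_rev, <- in_rev, map_fst_combine; auto.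
Qed.

Lemma extend_snoc Dl ys As y A : length ys = length As ->
  extend Dl (ys ++ [y]) (As ++ [A]) = (y, A) :: extend Dl ys As.
Proof. intros H. unfold extend. rewrite combine_app_length by auto. simpl. rewrite rev_app_distr. reflexivity. Qed.

Lemma Forall2_lookup_cons Dl y A acc ts : Forall2 (fun v T => lookup Dl v = Some (psi T)) acc ts -> ~ In y acc ->
  Forall2 (fun v T => lookup ((y, A) :: Dl) v = Some (psi T)) acc ts.
Proof.
  induction 1; intros Hy; constructor.
  - simpl. destruct (Nat.eqb y x) eqn:E; auto. apply Nat.eqb_eq in E. subst. exfalso. apply Hy. simpl. auto.
  - apply IHForall2. intro; apply Hy; simpl; auto.
Qed.

Lemma lookup_cons_neq y A Dl v : y <> v -> lookup ((y, A) :: Dl) v = lookup Dl v.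
Proof. intros H. simpl. rewrite <- Nat.eqb_neq in H. rewrite H. auto. Qed.

Lemma is_cps_app_typed acc rest k C : is_cps_app acc rest k C -> forall Dl G ts1 ts2 A1 As B,
  Forall2 (fun v T => lookup Dl v = Some (psi T)) acc ts1 -> Forall2 (has_type_t G) rest ts2 ->
  ts1 ++ ts2 = TArr A1 As B :: A1 :: As -> lookup Dl k = Some (Kty B) ->
  ctx_agree Dl G (tvars_list rest) -> has_type_d Dl C TR.
Proof.
  induction 1; intros Dl G ts1 ts2 A1 As B HF1 HF2 Ets Hk Hag.
  - inversion HF2; subst. rewrite app_nil_r in Ets. subst ts1.
    inversion HF1 as [|? ? ? ? Hx Hxs]; subst. inversion Hxs as [|x1 T1 xs' ts' Hx1 Hxs']; subst.
    simpl. constructor. apply T_app with (A1 := psi A1) (As := map psi As ++ [Kty B]).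
    + constructor. rewrite psi_arr in Hx. auto.
    + constructor. auto.
    + rewrite map_app. apply Forall2_app.
      * clear -Hxs'. induction Hxs'; constructor; auto. constructor. auto.
      * constructor; [constructor; auto|constructor].
  - inversion HF2 as [|? T ? ts2' HT Hrest]; subst. inversion HT as [? ? ? HG|]; subst.
    apply (IHis_cps_app Dl G (ts1 ++ [T]) ts2' A1 As B); auto.
    + apply Forall2_app; auto. constructor; [|constructor].
      rewrite Hag; [rewrite HG; auto|]. autorewrite with tv. simpl. auto.
    + rewrite <- app_assoc. auto.
    + intros w Hw. apply Hag. autorewrite with tv. simpl. auto.
  - inversion HF2 as [|? T ? ts2' HT Hrest]; subst.
    inversion HT as [|? ? ? ? A1' As' ? Hm Hm1 Hms]; subst.
    apply T_let_lam with (A1 := psi T) (As := []) (C := TR); auto.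
    + change (extend Dl [y] [psi T]) with ((y, psi T) :: Dl).
      apply (IHis_cps_app1 _ G (ts1 ++ [T]) ts2' A1 As B); auto.
      * apply Forall2_app; [apply Forall2_lookup_cons; auto; intro; apply H; simpl; right; apply in_or_app; auto|].
        constructor; [|constructor]. simpl. rewrite Nat.eqb_refl. auto.
      * rewrite <- app_assoc. auto.
      * rewrite lookup_cons_neq; auto. intro; subst; apply H; simpl; auto.
      * intros w Hw. rewrite lookup_cons_neq; [|intro; subst; apply H; simpl; right; apply in_or_app; auto].
        apply Hag. rewrite tvars_list_cons. apply in_or_app. auto.
    + apply (IHis_cps_app2 _ G [] (TArr A1' As' T :: A1' :: As') A1' As' T); auto.
      * simpl. rewrite Nat.eqb_refl. auto.
      * intros w Hw. rewrite lookup_cons_neq; [|intro; subst; auto].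
        apply Hag. rewrite tvars_list_cons, tvars_App. apply in_or_app. left.
        rewrite !tvars_list_cons in Hw. auto.
Qed.

Lemma is_cps_term_typed G m A k C Dl : has_type_t G m A -> is_cps_term m k C -> lookup Dl k = Some (Kty A) ->
  ctx_agree Dl G (tvars m) -> has_type_d Dl C TR.
Proof.
  intros HT HC Hk Hag. destruct HC as [x k|m m1 ms k C HC].
  - inversion HT as [? ? ? HG|]; subst. constructor. apply T_app with (A1 := psi A) (As := []).
    + constructor. auto.
    + constructor. rewrite Hag; [rewrite HG; auto|]. rewrite tvars_Var. simpl. auto.
    + constructor.
  - inversion HT as [|? ? ? ? A1 As ? Hm Hm1 Hms]; subst.
    apply (is_cps_app_typed _ _ _ _ HC Dl G [] (TArr A1 As A :: A1 :: As) A1 As A); auto.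
    all: intros w Hw; apply Hag; rewrite tvars_App; rewrite !tvars_list_cons in Hw; auto.
Qed.

Lemma is_cps_decl_typed G d A : has_type_d G d A -> forall kk CC Dl, is_cps_decl d kk CC -> lookup Dl kk = Some (Kty A) ->
  ctx_agree Dl G (fv_decl d) -> has_type_d Dl CC TR.
Proof.
  induction 1; intros kk CC Dl HC Hk Hag.
  - inversion HC; subst. eapply is_cps_term_typed; eauto.
  - inversion HC as [|? ? ? ? V C' Hxk HV HC']; subst. inversion HV; subst.
    constructor. apply (IHhas_type_d kk C' ((x, TUnit) :: Dl)); auto.
    + rewrite lookup_cons_neq; auto.
    + intros v Hv. simpl. destruct (Nat.eqb x v) eqn:E; auto.
      apply Hag. simpl. apply In_remove_all. split; auto. simpl. intros [E'|[]]. subst. rewrite Nat.eqb_refl in E. discriminate.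
  - inversion HC as [|? ? ? ? V C' Hxk HV HC']; subst.
    inversion HV as [|? ? ? k0 C0 Hk0 Hk0' HC0]; subst.
    apply T_let_lam with (A1 := psi A1) (As := map psi As ++ [Kty C]) (C := TR).
    + rewrite !length_app, length_map. simpl. lia.
    + apply (IHhas_type_d1 k0 C0).
      * auto.
      * change (y :: ys ++ [k0]) with ((y :: ys) ++ [k0]). change (psi A1 :: map psi As ++ [Kty C]) with ((psi A1 :: map psi As) ++ [Kty C]).
        rewrite extend_snoc by (simpl; rewrite length_map; auto). simpl. rewrite Nat.eqb_refl. auto.
      * intros v Hv. change (y :: ys ++ [k0]) with ((y :: ys) ++ [k0]). change (psi A1 :: map psi As ++ [Kty C]) with ((psi A1 :: map psi As) ++ [Kty C]).
        rewrite extend_snoc by (simpl; rewrite length_map; auto).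
        rewrite lookup_cons_neq by (intro; subst; auto).
        change (psi A1 :: map psi As) with (map psi (A1 :: As)). apply lookup_extend; [simpl; auto|].
        destruct (in_dec Nat.eq_dec v (y :: ys)); auto. left. apply Hag. simpl. apply in_or_app. left.
        apply In_remove_all. auto.
    + rewrite <- psi_arr. apply (IHhas_type_d2 kk C').
      * auto.
      * rewrite lookup_cons_neq; auto.
      * intros v Hv. simpl. destruct (Nat.eqb x v) eqn:E; auto.
        apply Hag. simpl. apply in_or_app. right. apply In_remove_all. split; auto. simpl. intros [E'|[]]. subst. rewrite Nat.eqb_refl in E. discriminate.
Qed.

Lemma cps_typed G D A k : ~ In k (allvars_decl D) -> has_type_d G D A ->
  has_type_d ((k, Kty A) :: psi_ctx G) (cps_decl D k) TR.
Proof.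
  intros Hk HT. apply (is_cps_decl_typed _ _ _ HT k). 
  - apply cps_decl_spec. auto.
  - simpl. rewrite Nat.eqb_refl. auto.
  - intros v Hv. rewrite lookup_cons_neq by (intro; subst; apply Hk; apply fv_allvars_decl; auto).
    unfold psi_ctx. change (fun p : var * ty => (fst p, psi (snd p))) with psi_binding. apply lookup_map.
Qed.

Theorem theorem2 :
  (forall (G : tctx) (D : decl) (A : ty) (k : var),
      ~ In k (allvars_decl D) ->
      has_type_d G D A ->
      has_type_d ((k, Kty A) :: psi_ctx G) (cps_decl D k) TR)
  /\
  (forall (G : tctx) (D D' : decl) (A : ty) (k : var),
      ~ In k (allvars_decl D) -> ~ In k (allvars_decl D') ->
      has_type_d G D A ->
      red_a D D' ->
      clos_trans decl red_ak (cps_decl D k) (cps_decl D' k)).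
Proof.
  split.
  - intros G D A k Hk HT. apply cps_typed; auto.
  - (* The simulation does not need the typing hypothesis. *)
    intros G D D' A k Hk Hk' _ Hred. apply cps_simulates_red; auto.
Qed.
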